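(* For every $n\geq 1$, $s_n\equiv t_n \pmod 2$.
   Context: Rectangulations are combinatorial equivalence classes of tilings of the unit square by axis-parallel rectangles, where two tilings are equivalent if a homeomorphism of the square fixing the four corners and preserving horizontality and verticality of segments takes one to the other. $t_n$ is the number of rectangulations with exactly $n$ tiles, and $s_n$ is the number of rectangulations with exactly $n$ tiles that are fixed by the natural action of the dihedral group $D_8$ of symmetries of the square. *)

From Stdlib Require Import Reals List Arith.
Import ListNotations.
Open Scope R_scope.

Definition pt := (R * R)%type.

Record rect := mkRect { rx0 : R; rx1 : R; ry0 : R; ry1 : R }.

Definition in_rect (r : rect) (p : pt) : Prop :=
  rx0 r <= fst p <= rx1 r /\ ry0 r <= snd p <= ry1 r.

Definition in_interior (r : rect) (p : pt) : Prop :=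
  rx0 r < fst p < rx1 r /\ ry0 r < snd p < ry1 r.

Definition in_sq (p : pt) : Prop := 0 <= fst p <= 1 /\ 0 <= snd p <= 1.

Definition tiling (n : nat) (T : list rect) : Prop :=
  length T = n /\
  (forall r, In r T -> 0 <= rx0 r < rx1 r /\ rx1 r <= 1 /\
                       0 <= ry0 r < ry1 r /\ ry1 r <= 1) /\
  (forall p, in_sq p -> exists r, In r T /\ in_rect r p) /\
  (forall i j d, (i < length T)%nat -> (j < length T)%nat -> i <> j ->
     forall p, ~ (in_interior (nth i T d) p /\ in_interior (nth j T d) p)).

Definition on_bd (T : list rect) (p : pt) : Prop :=
  exists r, In r T /\ in_rect r p /\ ~ in_interior r p.

Definition dist2 (p q : pt) : R :=
  Rmax (Rabs (fst p - fst q)) (Rabs (snd p - snd q)).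

Definition cont_on_sq (f : pt -> pt) : Prop :=
  forall p, in_sq p -> forall eps, 0 < eps -> exists del, 0 < del /\
    forall q, in_sq q -> dist2 p q < del -> dist2 (f p) (f q) < eps.

Definition homeo_sq (f : pt -> pt) : Prop :=
  (forall p, in_sq p -> in_sq (f p)) /\ cont_on_sq f /\
  exists g : pt -> pt,
    (forall p, in_sq p -> in_sq (g p)) /\ cont_on_sq g /\
    (forall p, in_sq p -> g (f p) = p) /\ (forall q, in_sq q -> f (g q) = q).

Definition fixes_corners (f : pt -> pt) : Prop :=
  f (0, 0) = (0, 0) /\ f (1, 0) = (1, 0) /\ f (0, 1) = (0, 1) /\ f (1, 1) = (1, 1).

(* Combinatorial equivalence: a corner-fixing homeomorphism of the square
   taking every tile of T1 onto a tile of T2 and taking horizontal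
   (resp. vertical) segments of the tiling to horizontal (resp. vertical)
   segments. *)
Definition equiv_tiling (T1 T2 : list rect) : Prop :=
  exists f : pt -> pt,
    homeo_sq f /\ fixes_corners f /\
    (forall r, In r T1 -> exists r', In r' T2 /\
       forall q, in_rect r' q <-> exists p, in_rect r p /\ f p = q) /\
    (forall p q, in_sq p -> in_sq q -> snd p = snd q ->
       (forall t, 0 <= t <= 1 -> on_bd T1 (fst p + t * (fst q - fst p), snd p)) ->
       snd (f p) = snd (f q)) /\
    (forall p q, in_sq p -> in_sq q -> fst p = fst q ->
       (forall t, 0 <= t <= 1 -> on_bd T1 (fst p, snd p + t * (snd q - snd p))) ->
       fst (f p) = fst (f q)).

(* The dihedral group D_8 of the square: an element is encoded by
   (sw, fx, fy): first reflect x -> 1-x if fx, then y -> 1-y if fy,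
   then swap the coordinates if sw.  These are the 8 symmetries. *)
Definition d8 := (bool * bool * bool)%type.

Definition act_rect (g : d8) (r : rect) : rect :=
  let '(sw, fx, fy) := g in
  let '(a, b) := if fx then (1 - rx1 r, 1 - rx0 r) else (rx0 r, rx1 r) in
  let '(c, d) := if fy then (1 - ry1 r, 1 - ry0 r) else (ry0 r, ry1 r) in
  if sw then mkRect c d a b else mkRect a b c d.

Definition act_tiling (g : d8) (T : list rect) : list rect := map (act_rect g) T.

Definition d8_fixed (T : list rect) : Prop :=
  forall g : d8, equiv_tiling (act_tiling g T) T.

(* k is the number of equivalence classes of n-tile tilings satisfying the
   (class-invariant) property P: there is a list of k pairwise inequivalent
   such tilings representing every class. *)
Definition num_classes (P : list rect -> Prop) (n k : nat) : Prop :=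
  exists L : list (list rect),
    length L = k /\
    (forall T, In T L -> tiling n T /\ P T) /\
    (forall i j d, (i < length L)%nat -> (j < length L)%nat -> i <> j ->
        ~ equiv_tiling (nth i L d) (nth j L d)) /\
    (forall T, tiling n T -> P T -> exists T', In T' L /\ equiv_tiling T T').

Definition is_t (n t : nat) : Prop := num_classes (fun _ => True) n t.
Definition is_s (n s : nat) : Prop := num_classes d8_fixed n s.

From Stdlib Require Import Reals List Arith Lra Lia Classical ClassicalEpsilon Permutation.
Import ListNotations.
Open Scope R_scope.

(* Combinatorial equivalence is an equivalence relation on n-tile tilings; symmetry is the
   delicate part, since the inverse of an equivalence must again keep boundary segments
   horizontal and vertical.  There are finitely many classes: straightening both axes by
   increasing piecewise-linear homeomorphisms of [0, 1] that send the tile coordinates to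
   fractions of bounded denominator makes every tiling equivalent to one from a fixed finite
   list.  The group D_8 acts on the classes and is generated by the involutions x -> 1 - x,
   y -> 1 - y and the diagonal reflection.  An involution of a finite set fixes as many points
   as the set has, mod 2; applying this to the three generators in turn (each preserves the
   fixed classes of the previous ones, as the generators commute up to conjugation) shows that
   the D_8-fixed classes are as many as all classes, mod 2. *)

(** * Continuous functions on an interval *)

Definition cont_on (k : R -> R) (a b : R) : Prop :=
  forall t, a <= t <= b -> forall eps, 0 < eps -> exists del, 0 < del /\
    forall s, a <= s <= b -> Rabs (t - s) < del -> Rabs (k t - k s) < eps.

Lemma cont_on_opp k a b : cont_on k a b -> cont_on (fun t => - k t) a b.
Proof.
  intros H t Ht eps He. destruct (H t Ht eps He) as [d [Hd H2]]. exists d. split; auto.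
  intros s Hs Hts. replace (- k t - - k s) with (- (k t - k s)) by ring.
  rewrite Rabs_Ropp. auto.
Qed.

Lemma cont_on_sub k a b a' b' : a <= a' -> b' <= b -> cont_on k a b -> cont_on k a' b'.
Proof.
  intros H1 H2 H t Ht eps He. destruct (H t ltac:(lra) eps He) as [d [Hd Hd2]].
  exists d. split; auto. intros s Hs. apply Hd2. lra.
Qed.

(* The crossing point is the supremum of the [t] below which [k] stays under [w]. *)
Lemma IVT_on_lt k a b w : a <= b -> cont_on k a b -> k a < w -> w < k b ->
  exists u, a <= u <= b /\ k u = w.
Proof.
  intros Hab Hc Ha Hb.
  set (S := fun t => a <= t <= b /\ forall s, a <= s <= t -> k s < w).
  assert (HSa : S a) by (split; [lra | intros s Hs; replace s with a by lra; exact Ha]).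
  assert (Hbd : bound S) by (exists b; intros t [Ht _]; lra).
  destruct (completeness S Hbd (ex_intro _ a HSa)) as [m [Hub Hlub]].
  assert (Ham : a <= m) by (apply Hub; exact HSa).
  assert (Hmb : m <= b) by (apply Hlub; intros t [Ht _]; lra).
  assert (below : forall s, a <= s < m -> k s < w).
  { intros s Hs. destruct (classic (exists t, S t /\ s < t)) as [[t [[_ Ht] Hst]] | Hn].
    - apply Ht; lra.
    - enough (m <= s) by lra. apply Hlub. intros t Ht.
      destruct (Rle_dec t s); [lra | exfalso; apply Hn; exists t; split; auto; lra]. }
  exists m. split; [lra|].
  destruct (Rtotal_order (k m) w) as [Hlt | [Heq | Hgt]]; [exfalso | exact Heq | exfalso].
  - assert (Hmb' : m < b) by (destruct (Req_dec m b); [subst; lra | lra]).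
    destruct (Hc m (conj Ham Hmb) (w - k m)) as [d [Hd Hd2]]; [lra|].
    set (t' := Rmin (m + d / 2) b).
    assert (t' <= m + d / 2 /\ t' <= b) by (split; [apply Rmin_l | apply Rmin_r]).
    enough (S t') by (assert (t' <= m) by (apply Hub; auto);
      unfold t' in *; destruct (Rle_dec (m + d / 2) b);
      [rewrite Rmin_left in *; lra | rewrite Rmin_right in *; lra]).
    split; [unfold t'; split; [apply Rmin_glb; lra | apply Rmin_r]|].
    intros s Hs. destruct (Rlt_dec s m); [apply below; lra|].
    assert (Rabs (m - s) < d) by (rewrite Rabs_left1; lra).
    specialize (Hd2 s ltac:(lra) H0). apply Rabs_def2 in Hd2. lra.
  - assert (Ham' : a < m) by (destruct (Req_dec a m); [subst; lra | lra]).
    destruct (Hc m (conj Ham Hmb) (k m - w)) as [d [Hd Hd2]]; [lra|].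
    set (s := Rmax (m - d / 2) a).
    assert (a <= s < m /\ m - d / 2 <= s)
      by (unfold s; split; [split; [apply Rmax_r | apply Rmax_lub_lt; lra] | apply Rmax_l]).
    assert (Rabs (m - s) < d) by (rewrite Rabs_right; lra).
    specialize (Hd2 s ltac:(lra) H0). apply Rabs_def2 in Hd2.
    specialize (below s ltac:(lra)). lra.
Qed.

Lemma IVT_on k a b w : a <= b -> cont_on k a b ->
  Rmin (k a) (k b) <= w <= Rmax (k a) (k b) -> exists u, a <= u <= b /\ k u = w.
Proof.
  intros Hab Hc Hw.
  destruct (Req_dec w (k a)) as [E|Na]; [exists a; split; [lra | auto]|].
  destruct (Req_dec w (k b)) as [E|Nb]; [exists b; split; [lra | auto]|].
  destruct (Rle_dec (k a) (k b)).
  - rewrite Rmin_left, Rmax_right in Hw by lra.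
    destruct (IVT_on_lt k a b w Hab Hc) as [u [Hu Hku]]; [lra | lra | eauto].
  - rewrite Rmin_right, Rmax_left in Hw by lra.
    destruct (IVT_on_lt (fun t => - k t) a b (- w) Hab (cont_on_opp k a b Hc))
      as [u [Hu Hku]]; simpl; try lra.
    exists u. split; [auto | lra].
Qed.

Lemma not_In_nbhd (l : list R) w : ~ In w l ->
  exists e, 0 < e /\ forall v, Rabs (v - w) < e -> ~ In v l.
Proof.
  induction l as [|c l IH]; intros Hw.
  - exists 1. split; [lra | intros v _ []].
  - assert (Hc : c <> w) by (intro; apply Hw; left; auto).
    destruct IH as [e [He H]]; [intro; apply Hw; right; auto|].
    exists (Rmin e (Rabs (c - w))). split.
    + apply Rmin_glb_lt; auto. apply Rabs_pos_lt. intro; apply Hc; lra.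
    + intros v Hv [E|Hin].
      * subst. pose proof (Rmin_r e (Rabs (v - w))). lra.
      * apply (H v); auto. pose proof (Rmin_l e (Rabs (c - w))). lra.
Qed.

Lemma not_In_between (l : list R) a b : a < b -> exists w, a < w < b /\ ~ In w l.
Proof.
  revert a b. induction l as [|c l IH]; intros a b Hab.
  - exists ((a + b) / 2). split; [lra | intros []].
  - destruct (Rlt_dec a c) as [Hac|Hac]; [destruct (Rlt_dec c b) as [Hcb|Hcb]|].
    + destruct (IH a c Hac) as [w [Hw Hn]]. exists w. split; [lra | intros [E|Hi]; [lra | auto]].
    + destruct (IH a b Hab) as [w [Hw Hn]]. exists w. split; [lra | intros [E|Hi]; [lra | auto]].
    + destruct (IH a b Hab) as [w [Hw Hn]]. exists w. split; [lra | intros [E|Hi]; [lra | auto]].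
Qed.

Lemma Rabs_le_inv a b : Rabs a <= b -> - b <= a <= b.
Proof. split_Rabs; lra. Qed.

Lemma Rmin4_le a b c d : let m := Rmin (Rmin a b) (Rmin c d) in
  m <= a /\ m <= b /\ m <= c /\ m <= d.
Proof.
  pose proof (Rmin_l (Rmin a b) (Rmin c d)). pose proof (Rmin_r (Rmin a b) (Rmin c d)).
  pose proof (Rmin_l a b). pose proof (Rmin_r a b).
  pose proof (Rmin_l c d). pose proof (Rmin_r c d).
  simpl. lra.
Qed.

Lemma cont_on_finite_range k a b (l : list R) : a <= b -> cont_on k a b ->
  (forall t, a <= t <= b -> In (k t) l) -> k a = k b.
Proof.
  intros Hab Hc Hin.
  destruct (Req_dec (k a) (k b)) as [|Hne]; [auto|exfalso].
  assert (Hlt : Rmin (k a) (k b) < Rmax (k a) (k b)).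
  { destruct (Rle_dec (k a) (k b)); [rewrite Rmin_left, Rmax_right | rewrite Rmin_right, Rmax_left];
      lra. }
  destruct (not_In_between l _ _ Hlt) as [w [Hw Hn]].
  destruct (IVT_on k a b w Hab Hc) as [u [Hu Hku]]; [lra|].
  apply Hn. rewrite <- Hku. auto.
Qed.

(** * Tiles and the boundary of a tiling *)

Definition proper_rect (r : rect) : Prop :=
  0 <= rx0 r < rx1 r /\ rx1 r <= 1 /\ 0 <= ry0 r < ry1 r /\ ry1 r <= 1.

Definition on_sq_edge (p : pt) : Prop := fst p = 0 \/ fst p = 1 \/ snd p = 0 \/ snd p = 1.

Definition rect0 : rect := mkRect 0 0 0 0.

Definition shared_by_two_tiles (T : list rect) (p : pt) : Prop :=
  exists i j, (i < length T)%nat /\ (j < length T)%nat /\ i <> j /\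
    in_rect (nth i T rect0) p /\ in_rect (nth j T rect0) p.

Lemma tiling_proper n T r : tiling n T -> In r T -> proper_rect r.
Proof. intros [_ [H _]] Hr. apply H; auto. Qed.

Lemma in_rect_sq r p : proper_rect r -> in_rect r p -> in_sq p.
Proof. unfold proper_rect, in_rect, in_sq. lra. Qed.

Lemma in_interior_rect r p : in_interior r p -> in_rect r p.
Proof. unfold in_interior, in_rect. lra. Qed.

Lemma center_in_interior r : proper_rect r ->
  in_interior r ((rx0 r + rx1 r) / 2, (ry0 r + ry1 r) / 2).
Proof. unfold proper_rect, in_interior. simpl. lra. Qed.

(* Moving [p] a little towards the center of the second tile lands in both interiors. *)
Lemma tiling_interior_excl n T d i j p : tiling n T ->
  (i < length T)%nat -> (j < length T)%nat -> i <> j ->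
  in_interior (nth i T d) p -> in_rect (nth j T d) p -> False.
Proof.
  intros HT Hi Hj Hij H1 H2.
  assert (G : proper_rect (nth j T d)) by (eapply tiling_proper; eauto; apply nth_In; auto).
  destruct HT as [_ [_ [_ HD]]].
  set (r1 := nth i T d) in *. set (r2 := nth j T d) in *.
  unfold proper_rect, in_interior, in_rect in *.
  set (e := Rmin (Rmin (fst p - rx0 r1) (rx1 r1 - fst p)) (Rmin (snd p - ry0 r1) (ry1 r1 - snd p))).
  assert (He : 0 < e) by (unfold e; repeat apply Rmin_glb_lt; lra).
  pose proof (Rmin4_le (fst p - rx0 r1) (rx1 r1 - fst p) (snd p - ry0 r1) (ry1 r1 - snd p))
    as He4.
  fold e in He4.
  set (s := Rmin (e / 2) (1 / 2)).
  assert (Hs : 0 < s /\ s <= e / 2 /\ s <= 1 / 2)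
    by (unfold s; split; [apply Rmin_glb_lt; lra | split; [apply Rmin_l | apply Rmin_r]]).
  set (cx := (rx0 r2 + rx1 r2) / 2). set (cy := (ry0 r2 + ry1 r2) / 2).
  apply (HD i j d Hi Hj Hij (fst p + s * (cx - fst p), snd p + s * (cy - snd p))).
  unfold in_interior; simpl. fold r1 r2. unfold cx, cy.
  assert (Ax : Rabs (cx - fst p) <= 1) by (apply Rabs_le; unfold cx; lra).
  assert (Ay : Rabs (cy - snd p) <= 1) by (apply Rabs_le; unfold cy; lra).
  assert (Bx : Rabs (s * (cx - fst p)) <= s) by (rewrite Rabs_mult, (Rabs_right s) by lra; nra).
  assert (By : Rabs (s * (cy - snd p)) <= s) by (rewrite Rabs_mult, (Rabs_right s) by lra; nra).
  apply Rabs_le_inv in Bx. apply Rabs_le_inv in By. unfold cx, cy in *.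
  split; split; split; nra.
Qed.

Lemma not_in_rect_nbhd r p : ~ in_rect r p -> exists e, 0 < e /\ forall q,
  Rabs (fst q - fst p) < e -> Rabs (snd q - snd p) < e -> ~ in_rect r q.
Proof.
  intros H. unfold in_rect in *.
  destruct (Rle_dec (rx0 r) (fst p)); [destruct (Rle_dec (fst p) (rx1 r))|].
  destruct (Rle_dec (ry0 r) (snd p)); [destruct (Rle_dec (snd p) (ry1 r))|].
  - exfalso; apply H; lra.
  - exists (snd p - ry1 r). split; [lra|]. intros q _ Hq Hin. apply Rabs_def2 in Hq. lra.
  - exists (ry0 r - snd p). split; [lra|]. intros q _ Hq Hin. apply Rabs_def2 in Hq. lra.
  - exists (fst p - rx1 r). split; [lra|]. intros q Hq _ Hin. apply Rabs_def2 in Hq. lra.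
  - exists (rx0 r - fst p). split; [lra|]. intros q Hq _ Hin. apply Rabs_def2 in Hq. lra.
Qed.

Lemma not_in_rects_nbhd (T : list rect) p : exists e, 0 < e /\
  forall r, In r T -> ~ in_rect r p ->
  forall q, Rabs (fst q - fst p) < e -> Rabs (snd q - snd p) < e -> ~ in_rect r q.
Proof.
  induction T as [|r T IH].
  - exists 1. split; [lra | intros r []].
  - destruct IH as [e [He H]].
    destruct (classic (in_rect r p)) as [Hr|Hr].
    + exists e. split; auto. intros r' [E|Hi]; [subst; tauto | apply H; auto].
    + destruct (not_in_rect_nbhd r p Hr) as [e' [He' H']].
      exists (Rmin e e'). split; [apply Rmin_glb_lt; auto|].
      intros r' [E|Hi] Hn q H1 H2.
      * subst. apply H'; eapply Rlt_le_trans; eauto; apply Rmin_r.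
      * apply (H r' Hi Hn q); eapply Rlt_le_trans; eauto; apply Rmin_l.
Qed.

(* Tiles not containing [p] stay away from it, so the tile covering a nearby point outside [r]
   contains [p] as well. *)
Lemma shared_near_escape n T r p : tiling n T -> In r T -> in_rect r p ->
  exists e, 0 < e /\ forall q, in_sq q -> Rabs (fst q - fst p) < e -> Rabs (snd q - snd p) < e ->
    ~ in_rect r q -> shared_by_two_tiles T p.
Proof.
  intros HT Hr Hp. destruct (not_in_rects_nbhd T p) as [e [He HA]].
  exists e. split; [auto|]. intros q Sq Hq1 Hq2 Hnq.
  destruct HT as [_ [_ [Hc _]]].
  destruct (Hc q Sq) as [r2 [Hr2 Hq]].
  assert (Hp2 : in_rect r2 p)
    by (apply NNPP; intro X; exact (HA r2 Hr2 X q Hq1 Hq2 Hq)).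
  destruct (In_nth T r rect0 Hr) as [i [Hi Ei]].
  destruct (In_nth T r2 rect0 Hr2) as [j [Hj Ej]].
  exists i, j. rewrite Ei, Ej. split; [auto | split; [auto | split; [|auto]]].
  intro E; subst j. rewrite Ei in Ej. subst. auto.
Qed.

Lemma on_bd_iff n T p : tiling n T ->
  on_bd T p <-> in_sq p /\ (on_sq_edge p \/ shared_by_two_tiles T p).
Proof.
  intros HT. split.
  - intros [r [Hr [Hin Hni]]].
    pose proof (tiling_proper n T r HT Hr) as G.
    split; [eapply in_rect_sq; eauto|].
    destruct (classic (on_sq_edge p)) as [Hs|Hs]; [left; auto | right].
    assert (P1 : 0 < fst p < 1 /\ 0 < snd p < 1)
      by (unfold on_sq_edge, proper_rect, in_rect in *;
          split; split; apply Rnot_le_lt; intro; apply Hs; lra).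
    destruct (shared_near_escape n T r p HT Hr Hin) as [e [He Hesc]].
    pose proof (Rmin4_le (fst p) (1 - fst p) (snd p) (1 - snd p)) as Hm.
    set (m := Rmin (Rmin (fst p) (1 - fst p)) (Rmin (snd p) (1 - snd p))) in Hm.
    assert (0 < m) by (unfold m; repeat apply Rmin_glb_lt; lra).
    set (h := Rmin e m / 2).
    assert (0 < h /\ h < e /\ h < m)
      by (unfold h; pose proof (Rmin_l e m); pose proof (Rmin_r e m);
          pose proof (Rmin_glb_lt e m 0); lra).
    assert (step : forall u v, Rabs u <= h -> Rabs v <= h -> ~ in_rect r (fst p + u, snd p + v) ->
              shared_by_two_tiles T p).
    { intros u v Hu Hv. apply Rabs_le_inv in Hu. apply Rabs_le_inv in Hv.
      apply Hesc; simpl; [unfold in_sq; simpl; lra | | ].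
      - replace (fst p + u - fst p) with u by ring. apply Rabs_def1; lra.
      - replace (snd p + v - snd p) with v by ring. apply Rabs_def1; lra. }
    assert (Rabs h <= h /\ Rabs (- h) <= h /\ Rabs 0 <= h)
      by (rewrite Rabs_Ropp, Rabs_R0, Rabs_right; lra).
    unfold in_rect, in_interior, proper_rect in *.
    destruct (Req_dec (fst p) (rx0 r)); [apply (step (- h) 0); simpl; lra|].
    destruct (Req_dec (fst p) (rx1 r)); [apply (step h 0); simpl; lra|].
    destruct (Req_dec (snd p) (ry0 r)); [apply (step 0 (- h)); simpl; lra|].
    destruct (Req_dec (snd p) (ry1 r)); [apply (step 0 h); simpl; lra|].
    exfalso. apply Hni. lra.
  - intros [Hs [Hb | [i [j [Hi [Hj [Hij [H1 H2]]]]]]]].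
    + destruct HT as [_ [Hg [Hc _]]]. destruct (Hc p Hs) as [r [Hr Hin]].
      exists r. split; [auto | split; [auto|]].
      pose proof (Hg r Hr). unfold on_sq_edge, in_interior in *. lra.
    + exists (nth i T rect0). split; [apply nth_In; auto | split; [auto|]].
      intro X. exact (tiling_interior_excl n T _ i j p HT Hi Hj Hij X H2).
Qed.

(** * Maps of the square respecting a tiling *)

Definition hseg (p q : pt) (t : R) : pt := (fst p + t * (fst q - fst p), snd p).
Definition vseg (p q : pt) (t : R) : pt := (fst p, snd p + t * (snd q - snd p)).

Definition maps_sq (F : pt -> pt) : Prop := forall p, in_sq p -> in_sq (F p).
Definition inj_sq (F : pt -> pt) : Prop :=
  forall p q, in_sq p -> in_sq q -> F p = F q -> p = q.
Definition maps_tiles (F : pt -> pt) (T1 T2 : list rect) : Prop :=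
  forall r, In r T1 -> exists r', In r' T2 /\
    forall q, in_rect r' q <-> exists p, in_rect r p /\ F p = q.
Definition keeps_horizontal (F : pt -> pt) (T : list rect) : Prop :=
  forall p q, in_sq p -> in_sq q -> snd p = snd q ->
    (forall t, 0 <= t <= 1 -> on_bd T (hseg p q t)) -> snd (F p) = snd (F q).
Definition keeps_vertical (F : pt -> pt) (T : list rect) : Prop :=
  forall p q, in_sq p -> in_sq q -> fst p = fst q ->
    (forall t, 0 <= t <= 1 -> on_bd T (vseg p q t)) -> fst (F p) = fst (F q).

Lemma equiv_tilingE T1 T2 : equiv_tiling T1 T2 <-> exists f, homeo_sq f /\ fixes_corners f /\
  maps_tiles f T1 T2 /\ keeps_horizontal f T1 /\ keeps_vertical f T1.
Proof. reflexivity. Qed.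

Lemma homeo_sq_props f : homeo_sq f -> maps_sq f /\ cont_on_sq f /\ inj_sq f.
Proof.
  intros [Hs [Hc [g [_ [_ [Hgf _]]]]]]. split; [auto | split; [auto|]].
  intros p q Sp Sq E. rewrite <- (Hgf p Sp), <- (Hgf q Sq), E. auto.
Qed.

Lemma dist2_fst a b : Rabs (fst a - fst b) <= dist2 a b.
Proof. apply Rmax_l. Qed.
Lemma dist2_snd a b : Rabs (snd a - snd b) <= dist2 a b.
Proof. apply Rmax_r. Qed.

Lemma convex_01 a b t : 0 <= a <= 1 -> 0 <= b <= 1 -> 0 <= t <= 1 -> 0 <= a + t * (b - a) <= 1.
Proof. intros. split; nra. Qed.

Lemma convex_between a b t : 0 <= t <= 1 -> Rmin a b <= a + t * (b - a) <= Rmax a b.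
Proof.
  intros Ht. destruct (Rle_dec a b).
  - rewrite Rmin_left, Rmax_right by lra. split; nra.
  - rewrite Rmin_right, Rmax_left by lra. split; nra.
Qed.

Lemma hseg_sq p q t : in_sq p -> in_sq q -> 0 <= t <= 1 -> in_sq (hseg p q t).
Proof. intros [Hp1 Hp2] [Hq1 Hq2] Ht. split; simpl; auto. apply convex_01; auto. Qed.
Lemma vseg_sq p q t : in_sq p -> in_sq q -> 0 <= t <= 1 -> in_sq (vseg p q t).
Proof. intros [Hp1 Hp2] [Hq1 Hq2] Ht. split; simpl; auto. apply convex_01; auto. Qed.

Lemma hseg0 p q : hseg p q 0 = p.
Proof. destruct p. unfold hseg; simpl. f_equal. ring. Qed.
Lemma hseg1 p q : snd p = snd q -> hseg p q 1 = q.
Proof. destruct p, q. unfold hseg; simpl. intros ->. f_equal. ring. Qed.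

Lemma convex_lipschitz a b t s : Rabs (b - a) <= 1 ->
  Rabs (a + t * (b - a) - (a + s * (b - a))) <= Rabs (t - s).
Proof.
  intros H. replace (a + t * (b - a) - (a + s * (b - a))) with ((t - s) * (b - a)) by ring.
  rewrite Rabs_mult. pose proof (Rabs_pos (t - s)). nra.
Qed.

Lemma hseg_dist p q t s : in_sq p -> in_sq q -> dist2 (hseg p q t) (hseg p q s) <= Rabs (t - s).
Proof.
  intros [Hp _] [Hq _]. unfold dist2, hseg; simpl. apply Rmax_lub.
  - apply convex_lipschitz. apply Rabs_le. lra.
  - rewrite Rminus_diag, Rabs_R0. apply Rabs_pos.
Qed.

Lemma cont_on_hseg F p q : cont_on_sq F -> in_sq p -> in_sq q ->
  cont_on (fun t => fst (F (hseg p q t))) 0 1 /\ cont_on (fun t => snd (F (hseg p q t))) 0 1.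
Proof.
  intros Hc Sp Sq. split; intros t Ht eps He;
    destruct (Hc (hseg p q t) (hseg_sq p q t Sp Sq Ht) eps He) as [d [Hd0 H]];
    exists d; (split; [auto|]); intros s Hs Hts;
    assert (X : dist2 (hseg p q t) (hseg p q s) < d)
      by (eapply Rle_lt_trans; [apply hseg_dist | ]; auto);
    specialize (H _ (hseg_sq p q s Sp Sq Hs) X); eapply Rle_lt_trans; eauto;
    [apply dist2_fst | apply dist2_snd].
Qed.

Lemma maps_tiles_distinct n T1 F i j r1 r2 : tiling n T1 -> inj_sq F ->
  (i < length T1)%nat -> (j < length T1)%nat -> i <> j ->
  (forall q, in_rect r1 q <-> exists p, in_rect (nth i T1 rect0) p /\ F p = q) ->
  (forall q, in_rect r2 q <-> exists p, in_rect (nth j T1 rect0) p /\ F p = q) -> r1 <> r2.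
Proof.
  intros HT Hinj Hi Hj Hij E1 E2 <-.
  assert (Gi : proper_rect (nth i T1 rect0)) by (eapply tiling_proper; eauto; apply nth_In; auto).
  assert (Gj : proper_rect (nth j T1 rect0)) by (eapply tiling_proper; eauto; apply nth_In; auto).
  pose proof (center_in_interior _ Gi) as Hc. set (c := (_, _)) in Hc.
  assert (X : in_rect r1 (F c)) by (apply E1; exists c; split; auto; apply in_interior_rect; auto).
  apply E2 in X. destruct X as [p [Hp Ep]].
  assert (p = c) as ->.
  { apply Hinj; [exact (in_rect_sq _ _ Gj Hp) | | exact Ep].
    exact (in_rect_sq _ _ Gi (in_interior_rect _ _ Hc)). }
  exact (tiling_interior_excl n T1 rect0 i j c HT Hi Hj Hij Hc Hp).
Qed.

Lemma on_bd_map n1 n2 T1 T2 F : tiling n1 T1 -> tiling n2 T2 -> maps_sq F -> inj_sq F ->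
  maps_tiles F T1 T2 -> (forall p, in_sq p -> on_sq_edge p -> on_sq_edge (F p)) ->
  forall p, on_bd T1 p -> on_bd T2 (F p).
Proof.
  intros H1 H2 Hs Hinj Ht Hb p Hp.
  apply (on_bd_iff n1 T1 p H1) in Hp. apply (on_bd_iff n2 T2 _ H2).
  destruct Hp as [Sp [B | [i [j [Hi [Hj [Hij [Pi Pj]]]]]]]]; [auto|].
  split; [auto | right].
  destruct (Ht (nth i T1 rect0)) as [r1 [Hr1 E1]]; [apply nth_In; auto|].
  destruct (Ht (nth j T1 rect0)) as [r2 [Hr2 E2]]; [apply nth_In; auto|].
  pose proof (maps_tiles_distinct n1 T1 F i j r1 r2 H1 Hinj Hi Hj Hij E1 E2) as N.
  destruct (In_nth T2 r1 rect0 Hr1) as [a [Ha Ea]].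
  destruct (In_nth T2 r2 rect0 Hr2) as [b [Hb' Eb]].
  exists a, b. rewrite Ea, Eb.
  split; [auto | split; [auto | split; [| split; [apply E1 | apply E2]; eauto]]].
  intros <-. apply N. rewrite <- Ea, <- Eb. auto.
Qed.

Lemma on_sq_edge_map n T f : tiling n T -> fixes_corners f ->
  keeps_horizontal f T -> keeps_vertical f T ->
  forall p, in_sq p -> on_sq_edge p -> on_sq_edge (f p).
Proof.
  intros HT [C00 [C10 [C01 _]]] Hh Hv p Sp Bp.
  assert (edge : forall x, in_sq x -> on_sq_edge x -> on_bd T x)
    by (intros; apply (on_bd_iff n T x HT); auto).
  assert (in_sq (0, 0) /\ in_sq (1, 0) /\ in_sq (0, 1)) as [S00 [S10 S01]]
    by (unfold in_sq; simpl; lra).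
  unfold on_sq_edge in *. destruct Bp as [B|[B|[B|B]]].
  - left. rewrite <- (Hv (0, 0) p), C00; auto.
    intros t Ht. apply edge; [apply vseg_sq; auto | left; reflexivity].
  - right; left. rewrite <- (Hv (1, 0) p), C10; auto.
    intros t Ht. apply edge; [apply vseg_sq; auto | right; left; reflexivity].
  - right; right; left. rewrite <- (Hh (0, 0) p), C00; auto.
    intros t Ht. apply edge; [apply hseg_sq; auto | right; right; left; reflexivity].
  - right; right; right. rewrite <- (Hh (0, 1) p), C01; auto.
    intros t Ht. apply edge; [apply hseg_sq; auto | right; right; right; reflexivity].
Qed.

(* Every point of the segment from [f p] to [f q] is, by the intermediate value theorem, the image
   of a point of the boundary segment from [p] to [q]. *)
Lemma keeps_horizontal_comp T1 T2 f h : maps_sq f -> cont_on_sq f ->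
  (forall p, on_bd T1 p -> on_bd T2 (f p)) ->
  keeps_horizontal f T1 -> keeps_horizontal h T2 -> keeps_horizontal (fun p => h (f p)) T1.
Proof.
  intros Sf Cf Bf Hf Hh p q Sp Sq E Hseg.
  assert (Eab : snd (f p) = snd (f q)) by (apply Hf; auto).
  apply Hh; auto. intros t Ht.
  destruct (cont_on_hseg f p q Cf Sp Sq) as [Ck _].
  destruct (IVT_on (fun u => fst (f (hseg p q u))) 0 1 (fst (f p) + t * (fst (f q) - fst (f p))))
    as [u [Hu Hku]];
    [lra | exact Ck | simpl; rewrite hseg0, hseg1 by auto; apply convex_between; auto|].
  simpl in Hku.
  assert (Hs2 : snd (f p) = snd (f (hseg p q u))).
  { apply Hf; auto; [apply hseg_sq; auto|]. intros t' Ht'. unfold hseg; simpl.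
    replace (fst p + t' * (fst p + u * (fst q - fst p) - fst p))
      with (fst p + (t' * u) * (fst q - fst p)) by ring.
    apply Hseg. split; nra. }
  assert (f (hseg p q u) = hseg (f p) (f q) t) as <-
    by (rewrite (surjective_pairing (f (hseg p q u))), Hku, <- Hs2; reflexivity).
  apply Bf, Hseg; auto.
Qed.

Definition is_corner (c : pt) : Prop := c = (0, 0) \/ c = (1, 0) \/ c = (0, 1) \/ c = (1, 1).

Lemma fixes_cornersP f : fixes_corners f <-> forall c, is_corner c -> f c = c.
Proof.
  unfold fixes_corners, is_corner. split.
  - intros [A [B [C D]]] c [E|[E|[E|E]]]; subst; auto.
  - intros H. repeat split; apply H; auto 6.
Qed.

(** * Symmetries of the square *)

Record sq_symmetry := SqSymmetry {
  sym_pt : pt -> pt;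
  sym_rect : rect -> rect;
  sym_pt_invol : forall p, sym_pt (sym_pt p) = p;
  sym_in_rect : forall r p, in_rect (sym_rect r) p <-> in_rect r (sym_pt p);
  sym_in_interior : forall r p, in_interior (sym_rect r) p <-> in_interior r (sym_pt p);
  sym_in_sq : forall p, in_sq (sym_pt p) <-> in_sq p;
  sym_dist2 : forall a b, dist2 (sym_pt a) (sym_pt b) = dist2 a b;
  sym_proper : forall r, proper_rect r -> proper_rect (sym_rect r);
  sym_corner : forall c, is_corner c -> is_corner (sym_pt c)
}.

Definition sym_conj (S : sq_symmetry) (f : pt -> pt) (p : pt) : pt :=
  sym_pt S (f (sym_pt S p)).

Section SqSymmetry.
Variable S : sq_symmetry.
Local Notation sigma := (sym_pt S).
Local Notation rho := (sym_rect S).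

Lemma sym_on_bd T p : on_bd (map rho T) p <-> on_bd T (sigma p).
Proof.
  unfold on_bd. split.
  - intros [r' [Hr [H1 H2]]]. apply in_map_iff in Hr. destruct Hr as [r [<- Hr]].
    exists r. rewrite sym_in_rect in H1. rewrite sym_in_interior in H2. auto.
  - intros [r [Hr [H1 H2]]]. exists (rho r). split; [apply in_map; auto|].
    rewrite sym_in_rect, sym_in_interior. auto.
Qed.

Lemma sym_tiling n T : tiling n T -> tiling n (map rho T).
Proof.
  intros [L [G [C D]]]. split; [|split; [|split]].
  - rewrite length_map; auto.
  - intros r' Hr'. apply in_map_iff in Hr'. destruct Hr' as [r [<- Hr]].
    apply sym_proper, G; auto.
  - intros p Sp. destruct (C (sigma p)) as [r [Hr Hin]]; [apply sym_in_sq; auto|].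
    exists (rho r). split; [apply in_map; auto | apply sym_in_rect; auto].
  - intros i j d Hi Hj Hij p [X Y]. rewrite length_map in Hi, Hj.
    rewrite (nth_indep _ d (rho d)), map_nth, sym_in_interior in X by (rewrite length_map; auto).
    rewrite (nth_indep _ d (rho d)), map_nth, sym_in_interior in Y by (rewrite length_map; auto).
    exact (D i j d Hi Hj Hij (sigma p) (conj X Y)).
Qed.

Lemma sym_conj_maps_sq f : maps_sq f -> maps_sq (sym_conj S f).
Proof. intros Sf p Sp. apply sym_in_sq, Sf, sym_in_sq. auto. Qed.

Lemma sym_conj_cont f : maps_sq f -> cont_on_sq f -> cont_on_sq (sym_conj S f).
Proof.
  intros Sf Cf p Sp eps He.
  destruct (Cf (sigma p) (proj2 (sym_in_sq S p) Sp) eps He) as [d [Hd H]].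
  exists d. split; [auto|]. intros q Sq Hpq. unfold sym_conj. rewrite sym_dist2.
  apply H; [apply sym_in_sq; auto | rewrite sym_dist2; auto].
Qed.

Lemma sym_conj_comp f g p : sym_conj S f (sym_conj S g p) = sym_conj S (fun x => f (g x)) p.
Proof. unfold sym_conj. rewrite sym_pt_invol. reflexivity. Qed.

Lemma sym_conj_homeo f : homeo_sq f -> homeo_sq (sym_conj S f).
Proof.
  intros [Sf [Cf [g [Sg [Cg [Gf Fg]]]]]].
  split; [apply sym_conj_maps_sq; auto | split; [apply sym_conj_cont; auto|]].
  exists (sym_conj S g).
  split; [apply sym_conj_maps_sq; auto | split; [apply sym_conj_cont; auto|]].
  split; intros p Sp; rewrite sym_conj_comp; unfold sym_conj;
    [rewrite Gf | rewrite Fg]; try apply sym_pt_invol; apply sym_in_sq; auto.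
Qed.

Lemma sym_conj_corners f : fixes_corners f -> fixes_corners (sym_conj S f).
Proof.
  rewrite !fixes_cornersP. intros H c Hc. unfold sym_conj.
  rewrite H by (apply sym_corner; auto). apply sym_pt_invol.
Qed.

Lemma sym_conj_tiles f T T' :
  maps_tiles f T T' -> maps_tiles (sym_conj S f) (map rho T) (map rho T').
Proof.
  intros Tf r' Hr'. apply in_map_iff in Hr'. destruct Hr' as [r [<- Hr]].
  destruct (Tf r Hr) as [s [Hs Es]]. exists (rho s). split; [apply in_map; auto|].
  intros q. rewrite sym_in_rect, Es. split.
  - intros [p [Hp Ep]]. exists (sigma p). split; [apply sym_in_rect; rewrite sym_pt_invol; auto|].
    unfold sym_conj. rewrite sym_pt_invol, Ep, sym_pt_invol. auto.
  - intros [p [Hp Ep]]. exists (sigma p). split; [apply sym_in_rect; auto|].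
    rewrite <- Ep. unfold sym_conj. rewrite sym_pt_invol. auto.
Qed.

Lemma sym_conj_on_bd f T1 T2 : (forall p, on_bd T1 p -> on_bd T2 (f p)) ->
  forall p, on_bd (map rho T1) p -> on_bd (map rho T2) (sym_conj S f p).
Proof.
  intros H p Hp. apply sym_on_bd. unfold sym_conj. rewrite sym_pt_invol.
  apply H, sym_on_bd. auto.
Qed.

Lemma sym_equiv_tiling T T' f : homeo_sq f -> fixes_corners f -> maps_tiles f T T' ->
  keeps_horizontal (sym_conj S f) (map rho T) -> keeps_vertical (sym_conj S f) (map rho T) ->
  equiv_tiling (map rho T) (map rho T').
Proof.
  intros. apply equiv_tilingE. exists (sym_conj S f).
  split; [apply sym_conj_homeo | split; [apply sym_conj_corners | split; [apply sym_conj_tiles|]]];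
    auto.
Qed.

End SqSymmetry.

Definition swap_pt (p : pt) : pt := (snd p, fst p).
Definition swap_rect (r : rect) : rect := mkRect (ry0 r) (ry1 r) (rx0 r) (rx1 r).

Definition swap_sym : sq_symmetry.
Proof.
  refine (SqSymmetry swap_pt swap_rect _ _ _ _ _ _ _).
  - intros []. reflexivity.
  - intros r p. unfold in_rect, swap_rect, swap_pt; simpl. tauto.
  - intros r p. unfold in_interior, swap_rect, swap_pt; simpl. tauto.
  - intros p. unfold in_sq, swap_pt; simpl. tauto.
  - intros a b. apply Rmax_comm.
  - unfold proper_rect, swap_rect; simpl. tauto.
  - unfold is_corner, swap_pt. intros c [E|[E|[E|E]]]; subst; simpl; tauto.
Defined.

Lemma keeps_vertical_swap f T :
  keeps_vertical f T <-> keeps_horizontal (sym_conj swap_sym f) (map swap_rect T).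
Proof.
  split.
  - intros H p q Sp Sq E Hs. apply H; try (apply (sym_in_sq swap_sym); auto); auto.
    intros t Ht. exact (proj1 (sym_on_bd swap_sym T (hseg p q t)) (Hs t Ht)).
  - intros H p q Sp Sq E Hs.
    pose proof (H (swap_pt p) (swap_pt q)) as X. unfold sym_conj in X. simpl in X.
    rewrite !(sym_pt_invol swap_sym) in X.
    apply X; try (apply (sym_in_sq swap_sym); auto); auto.
    intros t Ht. apply (sym_on_bd swap_sym T (hseg (swap_pt p) (swap_pt q) t)), Hs; auto.
Qed.

Lemma keeps_horizontal_swap f T :
  keeps_horizontal f T -> keeps_vertical (sym_conj swap_sym f) (map swap_rect T).
Proof.
  intros H p q Sp Sq E Hs. apply H; try (apply (sym_in_sq swap_sym); auto); auto.
  intros t Ht. exact (proj1 (sym_on_bd swap_sym T (vseg p q t)) (Hs t Ht)).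
Qed.

(** * Combinatorial equivalence is an equivalence relation *)

Lemma keeps_horizontal_ext F G T : (forall p, in_sq p -> F p = G p) ->
  keeps_horizontal F T -> keeps_horizontal G T.
Proof. intros E H p q Sp Sq Ep Hs. rewrite <- E, <- (E q); auto. Qed.

Lemma keeps_vertical_comp T1 T2 f h : maps_sq f -> cont_on_sq f ->
  (forall p, on_bd T1 p -> on_bd T2 (f p)) ->
  keeps_vertical f T1 -> keeps_vertical h T2 -> keeps_vertical (fun p => h (f p)) T1.
Proof.
  intros Sf Cf Bf Hf Hh. apply keeps_vertical_swap.
  apply (keeps_horizontal_ext (fun p => sym_conj swap_sym h (sym_conj swap_sym f p)));
    [intros; apply sym_conj_comp|].
  apply keeps_horizontal_comp with (T2 := map swap_rect T2).
  - apply sym_conj_maps_sq; auto.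
  - apply sym_conj_cont; auto.
  - apply (sym_conj_on_bd swap_sym); auto.
  - apply keeps_vertical_swap; auto.
  - apply keeps_vertical_swap; auto.
Qed.

Lemma equiv_tiling_refl T : equiv_tiling T T.
Proof.
  apply equiv_tilingE. exists (fun p => p).
  assert (Cid : cont_on_sq (fun p => p)) by (intros p _ eps He; exists eps; auto).
  split; [|split; [|split; [|split]]].
  - split; [auto | split; [auto|]]. exists (fun p => p). auto.
  - unfold fixes_corners; auto.
  - intros r Hr. exists r. split; [auto|]. intros q. split; eauto. intros [p [Hp <-]]. auto.
  - intros p q _ _ E _. auto.
  - intros p q _ _ E _. auto.
Qed.

Lemma homeo_sq_comp f h : homeo_sq f -> homeo_sq h -> homeo_sq (fun p => h (f p)).
Proof.
  intros [Sf [Cf [g [Sg [Cg [Gf Fg]]]]]] [Sh [Ch [k [Sk [Ck [Kh Hk]]]]]].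
  assert (comp : forall F G, maps_sq F -> cont_on_sq F -> cont_on_sq G ->
                  cont_on_sq (fun p => G (F p))).
  { intros F G SF CF CG p Sp eps He. destruct (CG (F p) (SF p Sp) eps He) as [d1 [Hd1 H1]].
    destruct (CF p Sp d1 Hd1) as [d [Hd H]]. exists d. split; auto. }
  split; [intros p Sp; auto | split; [apply comp; auto|]].
  exists (fun q => g (k q)).
  split; [intros p Sp; auto | split; [apply comp; auto | split]].
  - intros p Sp. rewrite Kh; auto.
  - intros q Sq. rewrite Fg; auto.
Qed.

Lemma equiv_tiling_trans n T1 T2 T3 : tiling n T1 -> tiling n T2 ->
  equiv_tiling T1 T2 -> equiv_tiling T2 T3 -> equiv_tiling T1 T3.
Proof.
  intros H1 H2 E1 E2. apply equiv_tilingE in E1, E2. apply equiv_tilingE.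
  destruct E1 as [f [Hf [Cf [Tf [Hhf Hvf]]]]]. destruct E2 as [h [Hh [Ch [Th [Hhh Hvh]]]]].
  destruct (homeo_sq_props f Hf) as [Sf [Kf If]].
  assert (Bf : forall p, on_bd T1 p -> on_bd T2 (f p))
    by exact (on_bd_map n n T1 T2 f H1 H2 Sf If Tf (on_sq_edge_map n T1 f H1 Cf Hhf Hvf)).
  exists (fun p => h (f p)). split; [|split; [|split; [|split]]].
  - apply homeo_sq_comp; auto.
  - destruct Cf as [A1 [A2 [A3 A4]]]. destruct Ch as [B1 [B2 [B3 B4]]].
    unfold fixes_corners. rewrite A1, A2, A3, A4. auto.
  - intros r Hr. destruct (Tf r Hr) as [r' [Hr' E']]. destruct (Th r' Hr') as [r'' [Hr'' E'']].
    exists r''. split; [auto|]. intros q. rewrite E''. split.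
    + intros [p' [Hp' <-]]. apply E' in Hp'. destruct Hp' as [p [Hp <-]]. eauto.
    + intros [p [Hp <-]]. exists (f p). split; [apply E'; eauto | auto].
  - apply (keeps_horizontal_comp T1 T2); auto.
  - apply (keeps_vertical_comp T1 T2); auto.
Qed.

(* The inverse of [f] sends a tile [r'] to the tile of [T1] covering [g] of the center of [r']. *)
Lemma maps_tiles_inv n1 n2 T1 T2 f g : tiling n1 T1 -> tiling n2 T2 -> maps_sq g ->
  (forall q, in_sq q -> f (g q) = q) -> (forall p, in_sq p -> g (f p) = p) ->
  maps_tiles f T1 T2 -> maps_tiles g T2 T1.
Proof.
  intros H1 H2 Sg Fg Gf Tf r' Hr'.
  pose proof (tiling_proper n2 T2 r' H2 Hr') as G'.
  pose proof (center_in_interior r' G') as Hc. set (c := (_, _)) in Hc.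
  assert (Sc : in_sq c) by exact (in_rect_sq _ _ G' (in_interior_rect _ _ Hc)).
  destruct H1 as [L1 [Gd1 [Cv1 _]]].
  destruct (Cv1 (g c) (Sg c Sc)) as [r [Hr Hgc]].
  destruct (Tf r Hr) as [r'' [Hr'' E]].
  assert (r'' = r') as <-.
  { assert (Hc'' : in_rect r'' c) by (apply E; exists (g c); auto).
    destruct (In_nth T2 r' rect0 Hr') as [j [Hj Ej]].
    destruct (In_nth T2 r'' rect0 Hr'') as [k [Hk Ek]].
    destruct (Nat.eq_dec j k) as [<-|Hjk]; [congruence | exfalso].
    rewrite <- Ej in Hc. rewrite <- Ek in Hc''.
    exact (tiling_interior_excl n2 T2 rect0 j k c H2 Hj Hk Hjk Hc Hc''). }
  exists r. split; [auto|]. intros q. split.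
  - intros Hq. exists (f q). split; [apply E; eauto|].
    apply Gf, (in_rect_sq r); [apply Gd1 |]; auto.
  - intros [p [Hp <-]]. apply E in Hp. destruct Hp as [p0 [Hp0 <-]].
    rewrite Gf; [auto | apply (in_rect_sq r); [apply Gd1 |]; auto].
Qed.

Lemma edge_onto n T F c : tiling n T -> cont_on_sq F -> maps_sq F -> (c = 0 \/ c = 1) ->
  F (0, c) = (0, c) -> F (1, c) = (1, c) -> keeps_horizontal F T ->
  forall x, in_sq x -> snd x = c -> exists y, in_sq y /\ snd y = c /\ F y = x.
Proof.
  intros HT CF SF Hc E0 E1 HF x Sx Ex.
  assert (S0 : in_sq (0, c)) by (unfold in_sq; simpl; lra).
  assert (S1 : in_sq (1, c)) by (unfold in_sq; simpl; lra).
  destruct (cont_on_hseg F (0, c) (1, c) CF S0 S1) as [Ck _].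
  destruct (IVT_on (fun u => fst (F (hseg (0, c) (1, c) u))) 0 1 (fst x)) as [u [Hu Hku]];
    [lra | exact Ck | simpl; rewrite hseg0, hseg1, E0, E1 by auto; simpl;
                      rewrite Rmin_left, Rmax_right by lra; apply Sx|].
  exists (hseg (0, c) (1, c) u). split; [apply hseg_sq; auto | split; [reflexivity|]].
  assert (snd (F (0, c)) = snd (F (hseg (0, c) (1, c) u))).
  { apply HF; auto; [apply hseg_sq; auto|]. intros t Ht. apply (on_bd_iff n T _ HT).
    split; [repeat apply hseg_sq; auto | left; unfold on_sq_edge; simpl; lra]. }
  rewrite E0 in H. simpl in *. rewrite (surjective_pairing x), (surjective_pairing (F _)).
  f_equal; congruence.
Qed.

Lemma on_sq_edge_inv n T f g : tiling n T -> homeo_sq f -> fixes_corners f ->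
  keeps_horizontal f T -> keeps_vertical f T -> (forall p, in_sq p -> g (f p) = p) ->
  forall x, in_sq x -> on_sq_edge x -> on_sq_edge (g x).
Proof.
  intros HT Hf Cf Hh Hv Gf x Sx Bx.
  destruct (homeo_sq_props f Hf) as [Sf [Kf If]].
  destruct Cf as [C00 [C10 [C01 C11]]].
  assert (HS : forall c, (c = 0 \/ c = 1) -> snd x = c -> on_sq_edge (g x)).
  { intros c Hc E. assert (F0 : f (0, c) = (0, c)) by (destruct Hc as [-> | ->]; auto).
    assert (F1 : f (1, c) = (1, c)) by (destruct Hc as [-> | ->]; auto).
    destruct (edge_onto n T f c HT Kf Sf Hc F0 F1 Hh x Sx E) as [y [Sy [Ey <-]]].
    rewrite Gf by auto. unfold on_sq_edge. destruct Hc; subst; auto. }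
  assert (VS : forall c, (c = 0 \/ c = 1) -> fst x = c -> on_sq_edge (g x)).
  { intros c Hc E. set (f' := sym_conj swap_sym f).
    assert (F0 : f' (0, c) = (0, c))
      by (unfold f', sym_conj; simpl; unfold swap_pt; simpl; destruct Hc as [-> | ->];
          [rewrite C00 | rewrite C10]; auto).
    assert (F1 : f' (1, c) = (1, c))
      by (unfold f', sym_conj; simpl; unfold swap_pt; simpl; destruct Hc as [-> | ->];
          [rewrite C01 | rewrite C11]; auto).
    destruct (edge_onto n (map swap_rect T) f' c (sym_tiling swap_sym n T HT)
                (sym_conj_cont swap_sym f Sf Kf) (sym_conj_maps_sq swap_sym f Sf) Hc F0 F1
                (proj1 (keeps_vertical_swap f T) Hv) (swap_pt x)
                (proj2 (sym_in_sq swap_sym x) Sx) E) as [y [Sy [Ey Fy]]].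
    unfold f', sym_conj in Fy. simpl in Fy.
    apply (f_equal swap_pt) in Fy. rewrite !(sym_pt_invol swap_sym) in Fy. subst x.
    rewrite Gf by (apply (sym_in_sq swap_sym); auto).
    unfold on_sq_edge, swap_pt; simpl. destruct Hc; subst; auto. }
  destruct Bx as [B|[B|[B|B]]]; [apply (VS 0) | apply (VS 1) | apply (HS 0) | apply (HS 1)]; auto.
Qed.

Definition x_coords (T : list rect) : list R := flat_map (fun r => [rx0 r; rx1 r]) T.
Definition y_coords (T : list rect) : list R := flat_map (fun r => [ry0 r; ry1 r]) T.

Lemma on_bd_coords T p : on_bd T p -> ~ In (snd p) (y_coords T) -> In (fst p) (x_coords T).
Proof.
  intros [r [Hr [H1 H2]]] Hy. unfold y_coords, x_coords in *.
  apply in_flat_map. exists r. split; [auto|].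
  assert (snd p <> ry0 r /\ snd p <> ry1 r)
    by (split; intro E; apply Hy; apply in_flat_map; exists r; split; simpl; auto).
  unfold in_rect, in_interior in *. simpl.
  destruct (Req_dec (fst p) (rx0 r)); [auto|]. destruct (Req_dec (fst p) (rx1 r)); [auto|].
  exfalso. apply H2. lra.
Qed.

(* Off the horizontal lines of [T], the boundary of [T] consists of finitely many vertical
   lines, so a boundary path avoiding those horizontal lines runs along one vertical line. *)
Lemma boundary_path_vertical T (k1 k2 : R -> R) a b : a <= b ->
  cont_on k1 a b -> cont_on k2 a b ->
  (forall s, a <= s <= b -> on_bd T (k1 s, k2 s)) ->
  (forall s, a <= s <= b -> ~ In (k2 s) (y_coords T)) ->
  k1 a = k1 b /\ forall t, 0 <= t <= 1 -> on_bd T (vseg (k1 a, k2 a) (k1 b, k2 b) t).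
Proof.
  intros Hab C1 C2 Hbd Hy.
  assert (const : forall s, a <= s <= b -> k1 s = k1 b).
  { intros s Hs. apply (cont_on_finite_range k1 s b (x_coords T)); [lra | |].
    - apply (cont_on_sub k1 a b); auto; lra.
    - intros t Ht. apply (on_bd_coords T (k1 t, k2 t)); [apply Hbd | apply Hy]; lra. }
  split; [apply const; lra|]. intros t Ht.
  destruct (IVT_on k2 a b (k2 a + t * (k2 b - k2 a)) Hab C2 (convex_between _ _ _ Ht))
    as [s [Hs Hks]].
  unfold vseg; simpl. rewrite <- Hks, (const a), <- (const s) by lra. apply Hbd; auto.
Qed.

(* If [g] moved the ends of a horizontal boundary segment to different heights, then near a
   height [w] that is not a horizontal line of [T1], [g] would map a piece of the segment onto
   a vertical boundary segment, which [f] keeps vertical; but [f] undoes [g]. *)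
Lemma keeps_horizontal_inv n T1 T2 f g : tiling n T1 -> maps_sq g -> cont_on_sq g ->
  (forall x, in_sq x -> f (g x) = x) -> (forall p, on_bd T2 p -> on_bd T1 (g p)) ->
  keeps_vertical f T1 -> keeps_horizontal g T2.
Proof.
  intros H1 Sg Cg Fg Bg Vf p q Sp Sq E Hs.
  destruct (Req_dec (fst p) (fst q)) as [Ex|Nx].
  { rewrite (surjective_pairing p), (surjective_pairing q), Ex, E. auto. }
  destruct (cont_on_hseg g p q Cg Sp Sq) as [C1 C2].
  set (k1 := fun u => fst (g (hseg p q u))) in *. set (k2 := fun u => snd (g (hseg p q u))) in *.
  assert (K0 : k2 0 = snd (g p)) by (unfold k2; rewrite hseg0; auto).
  assert (K1 : k2 1 = snd (g q)) by (unfold k2; rewrite hseg1; auto).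
  rewrite <- K0, <- K1. apply NNPP. intro Hne.
  assert (Hmm : Rmin (k2 0) (k2 1) < Rmax (k2 0) (k2 1))
    by (destruct (Rle_dec (k2 0) (k2 1));
        [rewrite Rmin_left, Rmax_right | rewrite Rmin_right, Rmax_left]; lra).
  destruct (not_In_between (y_coords T1) _ _ Hmm) as [w [Hw Hwn]].
  destruct (IVT_on k2 0 1 w ltac:(lra) C2 ltac:(lra)) as [u [Hu Hku]].
  assert (U0 : 0 < u).
  { destruct (Req_dec u 0) as [->|]; [exfalso|lra].
    destruct (Rle_dec (k2 0) (k2 1));
      [rewrite Rmin_left in Hw | rewrite Rmax_left in Hw]; lra. }
  destruct (not_In_nbhd (y_coords T1) w Hwn) as [e [He Haw]].
  destruct (C2 u Hu e He) as [d [Hd Hc2]].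
  set (s0 := Rmax 0 (u - d / 2)).
  assert (S0 : 0 <= s0 < u /\ u - d / 2 <= s0)
    by (unfold s0; split; [split; [apply Rmax_l | apply Rmax_lub_lt; lra] | apply Rmax_r]).
  destruct (boundary_path_vertical T1 k1 k2 s0 u) as [Ek1 Hv]; [lra | | | | |].
  - apply (cont_on_sub k1 0 1); auto; lra.
  - apply (cont_on_sub k2 0 1); auto; lra.
  - intros s Hs'. unfold k1, k2. rewrite <- surjective_pairing. apply Bg, Hs. lra.
  - intros s Hs'. apply Haw. rewrite <- Hku, Rabs_minus_sym. apply Hc2; [lra|].
    rewrite Rabs_right; lra.
  - assert (VF : fst (f (k1 s0, k2 s0)) = fst (f (k1 u, k2 u))).
    { apply Vf; auto; unfold k1, k2; rewrite <- !surjective_pairing; apply Sg, hseg_sq; auto; lra. }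
    unfold k1, k2 in VF. rewrite <- !surjective_pairing, !Fg in VF by (apply hseg_sq; auto; lra).
    unfold hseg in VF. simpl in VF.
    assert ((u - s0) * (fst q - fst p) = 0) as Z by lra.
    apply Rmult_integral in Z. destruct Z; lra.
Qed.

Lemma equiv_tiling_sym n T1 T2 : tiling n T1 -> tiling n T2 ->
  equiv_tiling T1 T2 -> equiv_tiling T2 T1.
Proof.
  intros H1 H2 E. apply equiv_tilingE in E. apply equiv_tilingE.
  destruct E as [f [Hf [Cf [Tf [Hhf Hvf]]]]].
  destruct (homeo_sq_props f Hf) as [Sf [Kf If]].
  pose proof Hf as [_ [_ [g [Sg [Cg [Gf Fg]]]]]].
  assert (Ig : inj_sq g) by (intros a b Sa Sb E; rewrite <- (Fg a Sa), <- (Fg b Sb), E; auto).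
  assert (Tg : maps_tiles g T2 T1) by (apply (maps_tiles_inv n n T1 T2 f g); auto).
  assert (Bg : forall p, on_bd T2 p -> on_bd T1 (g p))
    by (apply (on_bd_map n n T2 T1 g H2 H1 Sg Ig Tg), (on_sq_edge_inv n T1 f g); auto).
  exists g. split; [|split; [|split; [|split]]].
  - split; [auto | split; [auto|]]. exists f. auto.
  - apply fixes_cornersP. intros c Hc. rewrite <- (proj1 (fixes_cornersP f) Cf c Hc) at 1.
    apply Gf. destruct Hc as [E|[E|[E|E]]]; rewrite E; unfold in_sq; simpl; lra.
  - auto.
  - apply (keeps_horizontal_inv n T1 T2 f g); auto.
  - apply keeps_vertical_swap.
    apply (keeps_horizontal_inv n (map swap_rect T1) (map swap_rect T2) (sym_conj swap_sym f)).
    + apply (sym_tiling swap_sym); auto.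
    + apply sym_conj_maps_sq; auto.
    + apply sym_conj_cont; auto.
    + intros x Sx. rewrite sym_conj_comp. unfold sym_conj. rewrite Fg; [apply sym_pt_invol|].
      apply sym_in_sq; auto.
    + apply (sym_conj_on_bd swap_sym); auto.
    + apply keeps_horizontal_swap; auto.
Qed.

(** * The action of D_8 *)

Definition flip_pt (fx fy : bool) (p : pt) : pt :=
  (if fx then 1 - fst p else fst p, if fy then 1 - snd p else snd p).
Definition flip_rect (fx fy : bool) (r : rect) : rect := act_rect (false, fx, fy) r.

Definition flip_sym (fx fy : bool) : sq_symmetry.
Proof.
  refine (SqSymmetry (flip_pt fx fy) (flip_rect fx fy) _ _ _ _ _ _ _).
  - intros [a b]. destruct fx, fy; unfold flip_pt; simpl; f_equal; ring.
  - intros r p. destruct fx, fy; unfold flip_rect, flip_pt, in_rect; simpl; split; intros; lra.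
  - intros r p. destruct fx, fy; unfold flip_rect, flip_pt, in_interior; simpl; split; intros; lra.
  - intros p. destruct fx, fy; unfold flip_pt, in_sq; simpl; split; intros; lra.
  - intros a b. unfold dist2, flip_pt. destruct fx, fy; simpl; try reflexivity;
      repeat match goal with |- context [1 - ?x - (1 - ?y)] =>
        replace (1 - x - (1 - y)) with (- (x - y)) by ring; rewrite Rabs_Ropp end;
      reflexivity.
  - intros r. destruct fx, fy; unfold proper_rect, flip_rect; simpl; lra.
  - intros c [E|[E|[E|E]]]; subst; destruct fx, fy; unfold flip_pt, is_corner; simpl;
      rewrite ?Rminus_0_r, ?Rminus_diag; tauto.
Defined.

Lemma flip_hseg fx fy p q t :
  flip_pt fx fy (hseg p q t) = hseg (flip_pt fx fy p) (flip_pt fx fy q) t.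
Proof. destruct fx, fy; unfold flip_pt, hseg; simpl; f_equal; ring. Qed.
Lemma flip_vseg fx fy p q t :
  flip_pt fx fy (vseg p q t) = vseg (flip_pt fx fy p) (flip_pt fx fy q) t.
Proof. destruct fx, fy; unfold flip_pt, vseg; simpl; f_equal; ring. Qed.

Lemma flip_snd fx fy p q : snd (flip_pt fx fy p) = snd (flip_pt fx fy q) <-> snd p = snd q.
Proof. destruct fy; unfold flip_pt; simpl; lra. Qed.
Lemma flip_fst fx fy p q : fst (flip_pt fx fy p) = fst (flip_pt fx fy q) <-> fst p = fst q.
Proof. destruct fx; unfold flip_pt; simpl; lra. Qed.

Lemma keeps_horizontal_flip fx fy f T : keeps_horizontal f T ->
  keeps_horizontal (sym_conj (flip_sym fx fy) f) (map (flip_rect fx fy) T).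
Proof.
  intros H p q Sp Sq E Hs. unfold sym_conj. change (sym_pt (flip_sym fx fy)) with (flip_pt fx fy).
  apply flip_snd, H.
  - apply (sym_in_sq (flip_sym fx fy)); auto.
  - apply (sym_in_sq (flip_sym fx fy)); auto.
  - apply flip_snd; auto.
  - intros t Ht. rewrite <- flip_hseg. apply (sym_on_bd (flip_sym fx fy)), Hs; auto.
Qed.

Lemma keeps_vertical_flip fx fy f T : keeps_vertical f T ->
  keeps_vertical (sym_conj (flip_sym fx fy) f) (map (flip_rect fx fy) T).
Proof.
  intros H p q Sp Sq E Hs. unfold sym_conj. change (sym_pt (flip_sym fx fy)) with (flip_pt fx fy).
  apply flip_fst, H.
  - apply (sym_in_sq (flip_sym fx fy)); auto.
  - apply (sym_in_sq (flip_sym fx fy)); auto.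
  - apply flip_fst; auto.
  - intros t Ht. rewrite <- flip_vseg. apply (sym_on_bd (flip_sym fx fy)), Hs; auto.
Qed.

Lemma act_tiling_split sw fx fy T : act_tiling (sw, fx, fy) T =
  if sw then map swap_rect (map (flip_rect fx fy) T) else map (flip_rect fx fy) T.
Proof.
  destruct sw; unfold act_tiling; [rewrite map_map|];
    apply map_ext; intros r; destruct fx, fy; reflexivity.
Qed.

Lemma tiling_act g n T : tiling n T -> tiling n (act_tiling g T).
Proof.
  destruct g as [[[] fx] fy]; intros H; rewrite act_tiling_split;
    [apply (sym_tiling swap_sym) |]; apply (sym_tiling (flip_sym fx fy)); auto.
Qed.

Lemma equiv_tiling_act g T T' : equiv_tiling T T' ->
  equiv_tiling (act_tiling g T) (act_tiling g T').
Proof.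
  destruct g as [[sw fx] fy]. intros E. rewrite !act_tiling_split.
  apply equiv_tilingE in E. destruct E as [f [Hf [Cf [Tf [Hh Hv]]]]].
  assert (Ef : equiv_tiling (map (flip_rect fx fy) T) (map (flip_rect fx fy) T')).
  { apply (sym_equiv_tiling (flip_sym fx fy) T T' f); auto.
    - apply keeps_horizontal_flip; auto.
    - apply keeps_vertical_flip; auto. }
  destruct sw; [|exact Ef].
  apply equiv_tilingE in Ef. destruct Ef as [f' [Hf' [Cf' [Tf' [Hh' Hv']]]]].
  apply (sym_equiv_tiling swap_sym _ _ f'); auto.
  - apply keeps_vertical_swap; auto.
  - apply keeps_horizontal_swap; auto.
Qed.

Definition flip_x : list rect -> list rect := act_tiling (false, true, false).
Definition flip_y : list rect -> list rect := act_tiling (false, false, true).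
Definition swap_xy : list rect -> list rect := act_tiling (true, false, false).

Lemma act_tiling_invol g T : (forall r, act_rect g (act_rect g r) = r) ->
  act_tiling g (act_tiling g T) = T.
Proof.
  intros H. unfold act_tiling. rewrite map_map. rewrite <- (map_id T) at 2. apply map_ext, H.
Qed.

Lemma flip_x_invol T : flip_x (flip_x T) = T.
Proof. apply act_tiling_invol. intros []. unfold act_rect; simpl. f_equal; ring. Qed.
Lemma flip_y_invol T : flip_y (flip_y T) = T.
Proof. apply act_tiling_invol. intros []. unfold act_rect; simpl. f_equal; ring. Qed.
Lemma swap_xy_invol T : swap_xy (swap_xy T) = T.
Proof. apply act_tiling_invol. intros []. reflexivity. Qed.

Lemma flip_x_flip_y T : flip_x (flip_y T) = flip_y (flip_x T).
Proof. unfold flip_x, flip_y, act_tiling. rewrite !map_map. apply map_ext. now intros []. Qed.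
Lemma flip_x_swap_xy T : flip_x (swap_xy T) = swap_xy (flip_y T).
Proof. unfold flip_x, flip_y, swap_xy, act_tiling. rewrite !map_map. now apply map_ext. Qed.
Lemma flip_y_swap_xy T : flip_y (swap_xy T) = swap_xy (flip_x T).
Proof. unfold flip_x, flip_y, swap_xy, act_tiling. rewrite !map_map. now apply map_ext. Qed.

Lemma act_tiling_generators sw fx fy T : act_tiling (sw, fx, fy) T =
  (if sw then swap_xy else fun U => U)
    ((if fy then flip_y else fun U => U) ((if fx then flip_x else fun U => U) T)).
Proof.
  unfold flip_x, flip_y, swap_xy, act_tiling.
  destruct sw, fx, fy; rewrite ?map_map;
    (apply map_ext || (rewrite <- (map_id T) at 2; apply map_ext)); intros []; reflexivity.
Qed.

(** * Counting classes of a partial equivalence *)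

Section Transversal.
(* Every lemma below takes all section hypotheses, so that they are instantiated uniformly. *)
Set Default Proof Using "All".
Variables (X : Type) (D : X -> Prop) (E : X -> X -> Prop).
Hypothesis E_refl : forall x, E x x.
Hypothesis E_sym : forall x y, D x -> D y -> E x y -> E y x.
Hypothesis E_trans : forall x y z, D x -> D y -> E x y -> E y z -> E x z.

Definition transversal (P : X -> Prop) (L : list X) : Prop :=
  NoDup L /\ (forall x, In x L -> D x /\ P x) /\
  (forall x y, In x L -> In y L -> x <> y -> ~ E x y) /\
  (forall x, D x -> P x -> exists y, In y L /\ E x y).

Lemma transversal_ext P Q L : (forall x, D x -> P x <-> Q x) ->
  transversal P L -> transversal Q L.
Proof.
  intros HPQ [ND [HL [HE HC]]]. split; [auto | split; [|split; [auto|]]].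
  - intros x Hx. destruct (HL x Hx). split; [|apply HPQ]; auto.
  - intros x Dx Qx. apply HC; [|apply HPQ]; auto.
Qed.

Lemma transversal_perm P L L' : Permutation L L' -> transversal P L -> transversal P L'.
Proof.
  intros HP [ND [HL [HE HC]]]. split; [|split; [|split]].
  - exact (Permutation_NoDup HP ND).
  - intros x Hx. apply HL, (Permutation_in _ (Permutation_sym HP)); auto.
  - intros x y Hx Hy. apply HE; apply (Permutation_in _ (Permutation_sym HP)); auto.
  - intros x Dx Px. destruct (HC x Dx Px) as [y [Hy Exy]].
    exists y. split; [apply (Permutation_in _ HP) | ]; auto.
Qed.

Lemma transversal_drop P x L : transversal P (x :: L) ->
  transversal (fun y => P y /\ ~ E y x) L.
Proof.
  intros [ND [HL [HE HC]]]. apply NoDup_cons_iff in ND as [Hx ND].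
  split; [auto | split; [|split]].
  - intros y Hy. destruct (HL y (or_intror Hy)) as [Dy Py].
    split; [auto | split; [auto|]]. apply HE; simpl; auto. intros ->. auto.
  - intros y z Hy Hz. apply HE; simpl; auto.
  - intros y Dy [Py Nyx]. destruct (HC y Dy Py) as [z [[<-|Hz] Eyz]]; [tauto | eauto].
Qed.

Lemma transversal_cons P x L : D x -> P x -> transversal (fun y => P y /\ ~ E y x) L ->
  transversal P (x :: L).
Proof.
  intros Dx Px [ND [HL [HE HC]]].
  assert (Hx : ~ In x L) by (intro Hin; destruct (HL x Hin) as [_ [_ N]]; auto).
  split; [constructor; auto | split; [|split]].
  - intros y [<-|Hy]; [auto|]. destruct (HL y Hy) as [Dy [Py _]]. auto.
  - intros y z [<-|Hy] [<-|Hz] Hyz; [tauto | | |].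
    + intro Exz. destruct (HL z Hz) as [Dz [_ N]]. apply N, E_sym; auto.
    + destruct (HL y Hy) as [_ [_ N]]. auto.
    + apply HE; auto.
  - intros y Dy Py. destruct (classic (E y x)) as [Eyx|Nyx]; [exists x; simpl; auto|].
    destruct (HC y Dy (conj Py Nyx)) as [z [Hz Eyz]]. exists z. simpl; auto.
Qed.

Lemma transversal_exists P (C : list X) :
  (forall x, D x -> P x -> exists c, In c C /\ D c /\ E x c) -> exists L, transversal P L.
Proof.
  revert P. induction C as [|c C IH]; intros P Hcov.
  - exists []. split; [constructor | split; [intros x [] | split; [intros x y [] | ]]].
    intros x Dx Px. destruct (Hcov x Dx Px) as [c [[] _]].
  - destruct (classic (exists x0, D x0 /\ P x0 /\ E x0 c)) as [[x0 [D0 [P0 E0]]] | N].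
    + destruct (IH (fun y => P y /\ ~ E y x0)) as [L HL].
      * intros y Dy [Py Ny]. destruct (Hcov y Dy Py) as [c' [[<-|Hc'] [Dc' Ec']]]; [|eauto].
        exfalso. apply Ny. apply (E_trans y c x0); auto.
      * exists (x0 :: L). apply transversal_cons; auto.
    + apply IH. intros y Dy Py. destruct (Hcov y Dy Py) as [c' [[<-|Hc'] [Dc' Ec']]]; [|eauto].
      exfalso. apply N. eauto.
Qed.

Lemma avoid_pair_E_closed P x x' : (forall y z, D y -> D z -> P y -> E y z -> P z) ->
  forall y z, D y -> D z -> P y /\ ~ E y x /\ ~ E y x' -> E y z -> P z /\ ~ E z x /\ ~ E z x'.
Proof.
  intros HP y z Dy Dz [Py [Nx Nx']] Eyz.
  split; [eauto | split; intro Ez; [apply Nx | apply Nx']; apply (E_trans y z); auto].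
Qed.

Section Involution.
Variable s : X -> X.
Hypothesis s_invol : forall x, s (s x) = x.
Hypothesis s_D : forall x, D x -> D (s x).
Hypothesis s_E : forall x y, E x y -> E (s x) (s y).

Definition fixed (x : X) : Prop := E (s x) x.

Lemma E_s_swap x y : E (s x) y -> E x (s y).
Proof. intros H. rewrite <- (s_invol x). apply s_E; auto. Qed.

Lemma fixed_E x y : D x -> D y -> fixed x -> E x y -> fixed y.
Proof.
  unfold fixed. intros Dx Dy Fx Exy.
  apply (E_trans (s y) (s x) y (s_D y Dy) (s_D x Dx)).
  - apply s_E, E_sym; auto.
  - apply (E_trans (s x) x y); auto.
Qed.

Lemma avoid_pair_s_closed P x x' : D x -> D x' -> E (s x) x' ->
  (forall y, D y -> P y -> P (s y)) ->
  forall y, D y -> P y /\ ~ E y x /\ ~ E y x' -> P (s y) /\ ~ E (s y) x /\ ~ E (s y) x'.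
Proof.
  intros Dx Dx' Ex HP y Dy [Py [Nx Nx']]. split; [auto | split; intro Hsy].
  - apply Nx'. apply (E_trans y (s x) x'); auto. apply E_s_swap; auto.
  - apply Nx. apply (E_trans y (s x') x); auto; [apply E_s_swap; auto|].
    apply E_sym; auto. apply E_s_swap; auto.
Qed.

Lemma fixed_avoid_pair x x' : D x -> D x' -> E (s x) x' -> ~ fixed x ->
  forall y, D y -> fixed y -> ~ E y x /\ ~ E y x'.
Proof.
  intros Dx Dx' Ex Nx y Dy Fy. split; intro Ey.
  - exact (Nx (fixed_E y x Dy Dx Fy Ey)).
  - apply Nx. pose proof (fixed_E y x' Dy Dx' Fy Ey) as Fx'.
    apply (E_trans (s x) x' x); auto. apply E_sym; auto.
    apply (E_trans x (s x') x'); auto. apply E_s_swap; auto.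
Qed.

(* An involution pairs up the classes it does not fix, so removing one fixed class, or a
   class together with its image, preserves the parity. *)
Lemma transversal_fixed_parity P L :
  (forall x y, D x -> D y -> P x -> E x y -> P y) -> (forall x, D x -> P x -> P (s x)) ->
  transversal P L -> exists L', transversal (fun x => P x /\ fixed x) L' /\
    Nat.even (length L') = Nat.even (length L).
Proof.
  remember (length L) as k eqn:Hk. revert P L Hk.
  induction k as [k IH] using lt_wf_ind. intros P [|l rest] -> HPE HPs HT.
  { exists []. split; [|reflexivity]. split; [constructor|].
    split; [intros x []|]. split; [intros x y []|].
    intros x Dx [Px _]. destruct HT as [_ [_ [_ HC]]]. destruct (HC x Dx Px) as [y [[] _]]. }
  assert (Hl : D l /\ P l) by (apply HT; left; auto). destruct Hl as [Dl Pl].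
  destruct (classic (fixed l)) as [Fl|Fl].
  - assert (HT1 : transversal (fun y => P y /\ ~ E y l /\ ~ E y l) rest)
      by (apply (transversal_ext (fun y => P y /\ ~ E y l)); [tauto|];
          apply transversal_drop; auto).
    destruct (IH (length rest) ltac:(simpl; lia) _ rest eq_refl
                (avoid_pair_E_closed P l l HPE) (avoid_pair_s_closed P l l Dl Dl Fl HPs) HT1)
      as [L1 [HL1 Hpar]].
    exists (l :: L1).
    split; [|cbn [length]; rewrite !Nat.even_succ; unfold Nat.odd; rewrite Hpar; reflexivity].
      apply transversal_cons; auto. eapply transversal_ext; [|exact HL1]. simpl; tauto.
  - destruct HT as [ND [HL [HE HC]]].
    destruct (HC (s l) (s_D l Dl) (HPs l Dl Pl)) as [l' [[<-|Hl'] El']]; [tauto|].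
    assert (Dl' : D l') by (apply HL; right; auto).
    destruct (in_split l' rest Hl') as [r1 [r2 ->]].
    assert (HT2 : transversal (fun y => P y /\ ~ E y l /\ ~ E y l') (r1 ++ r2)).
    { apply (transversal_ext (fun y => (P y /\ ~ E y l) /\ ~ E y l')); [tauto|].
      apply transversal_drop, transversal_drop.
      apply (transversal_perm P (l :: r1 ++ l' :: r2)); [|split; auto].
      apply perm_skip. symmetry. apply Permutation_middle. }
    destruct (IH (length (r1 ++ r2)) ltac:(simpl; rewrite !length_app; simpl; lia) _ _ eq_refl
                (avoid_pair_E_closed P l l' HPE) (avoid_pair_s_closed P l l' Dl Dl' El' HPs) HT2)
      as [L2 [HL2 Hpar]].
    exists L2. split.
    + eapply transversal_ext; [|exact HL2]. intros y Dy.
      pose proof (fixed_avoid_pair l l' Dl Dl' El' Fl y Dy). tauto.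
    + rewrite Hpar. cbn [length]. rewrite !length_app. cbn [length].
      rewrite Nat.add_succ_r. reflexivity.
Qed.

End Involution.
End Transversal.

(** * Straightening a finite set of coordinates *)

Definition positives (X : list R) : list R :=
  filter (fun d => if Rlt_dec 0 d then true else false) X.
Definition pred_in (X : list R) (c : R) : R :=
  fold_right Rmax 0 (filter (fun d => if Rlt_dec d c then true else false) X).
Definition ramp (a c x : R) : R := Rmin 1 (Rmax 0 ((x - a) / (c - a))).
Definition ramp_sum (X l : list R) (x : R) : R :=
  fold_right (fun c acc => ramp (pred_in X c) c x + acc) 0 l.

(* Each positive [c] in [X] contributes a ramp rising from 0 to 1 across the gap of [X] that ends
   at [c]; the result is an increasing homeomorphism of [0, 1] sending every element of [X] to a
   multiple of [1 / length (positives X)]. *)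
Definition straighten (X : list R) (x : R) : R :=
  ramp_sum X (positives X) x / INR (length (positives X)).

Definition coord_list (X : list R) : Prop := In 0 X /\ In 1 X /\ forall d, In d X -> 0 <= d <= 1.

Lemma positives_In X c : In c (positives X) <-> In c X /\ 0 < c.
Proof. unfold positives. rewrite filter_In. destruct (Rlt_dec 0 c); intuition discriminate. Qed.

Lemma positives_pos X c : In c (positives X) -> 0 < c.
Proof. intros H. apply positives_In in H. tauto. Qed.

Lemma fold_max_lt l c : 0 < c -> (forall d, In d l -> d < c) -> fold_right Rmax 0 l < c.
Proof.
  induction l as [|a l IH]; intros Hc H; simpl; [auto|].
  apply Rmax_lub_lt; [apply H; simpl; auto | apply IH; auto; intros; apply H; simpl; auto].
Qed.
Lemma fold_max_le l b : 0 <= b -> (forall d, In d l -> d <= b) -> fold_right Rmax 0 l <= b.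
Proof.
  induction l as [|a l IH]; intros Hb H; simpl; [auto|].
  apply Rmax_lub; [apply H; simpl; auto | apply IH; auto; intros; apply H; simpl; auto].
Qed.
Lemma fold_max_ge l d : In d l -> d <= fold_right Rmax 0 l.
Proof.
  induction l as [|a l IH]; intros Hd; [destruct Hd|].
  destruct Hd as [<-|Hd]; simpl; [apply Rmax_l|].
  eapply Rle_trans; [apply IH; auto | apply Rmax_r].
Qed.
Lemma fold_max_nonneg l : 0 <= fold_right Rmax 0 l.
Proof. induction l; simpl; [lra | eapply Rle_trans; [exact IHl | apply Rmax_r]]. Qed.

Lemma pred_in_lt X c : 0 < c -> pred_in X c < c.
Proof.
  intros Hc. apply fold_max_lt; auto. intros d Hd. apply filter_In in Hd.
  destruct Hd as [_ Hd]. destruct (Rlt_dec d c); [auto | discriminate].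
Qed.
Lemma pred_in_ge X c d : In d X -> d < c -> d <= pred_in X c.
Proof.
  intros Hd Hdc. apply fold_max_ge, filter_In. split; [auto|]. destruct (Rlt_dec d c); tauto.
Qed.
Lemma pred_in_le X c x : 0 <= x -> (forall d, In d X -> d < c -> d <= x) -> pred_in X c <= x.
Proof.
  intros Hx H. apply fold_max_le; [auto|]. intros d Hd. apply filter_In in Hd.
  destruct Hd as [Hd Hdc]. destruct (Rlt_dec d c); [auto | discriminate].
Qed.

Lemma ramp_lipschitz a c x y : a < c -> Rabs (ramp a c x - ramp a c y) <= Rabs (x - y) / (c - a).
Proof.
  intros H. unfold ramp.
  assert (lip : forall F u v, (F = Rmin 1 \/ F = Rmax 0) -> Rabs (F u - F v) <= Rabs (u - v))
    by (intros F u v [E|E]; subst F; unfold Rmin, Rmax;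
        destruct (Rle_dec 1 u), (Rle_dec 1 v), (Rle_dec 0 u), (Rle_dec 0 v); split_Rabs; lra).
  eapply Rle_trans; [apply lip; auto|]. eapply Rle_trans; [apply lip; auto|].
  replace ((x - a) / (c - a) - (y - a) / (c - a)) with ((x - y) / (c - a)) by (field; lra).
  unfold Rdiv. rewrite Rabs_mult, (Rabs_right (/ (c - a))); [lra|].
  apply Rle_ge, Rlt_le, Rinv_0_lt_compat. lra.
Qed.

Lemma ramp_lo a c x : a < c -> x <= a -> ramp a c x = 0.
Proof.
  intros H Hx. unfold ramp. assert ((x - a) / (c - a) <= 0).
  { unfold Rdiv. assert (0 < / (c - a)) by (apply Rinv_0_lt_compat; lra). nra. }
  rewrite Rmax_left, Rmin_right; lra.
Qed.
Lemma ramp_hi a c x : a < c -> c <= x -> ramp a c x = 1.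
Proof.
  intros H Hx. unfold ramp. assert (1 <= (x - a) / (c - a)).
  { apply (Rmult_le_reg_r (c - a)); [lra|]. unfold Rdiv. rewrite Rmult_assoc, Rinv_l; lra. }
  rewrite Rmax_right, Rmin_left; lra.
Qed.
Lemma ramp_mid a c x : a <= x <= c -> a < c -> ramp a c x = (x - a) / (c - a).
Proof.
  intros Hx H. unfold ramp.
  assert (0 <= (x - a) / (c - a))
    by (unfold Rdiv; apply Rmult_le_pos; [lra | apply Rlt_le, Rinv_0_lt_compat; lra]).
  assert ((x - a) / (c - a) <= 1).
  { apply (Rmult_le_reg_r (c - a)); [lra|]. unfold Rdiv. rewrite Rmult_assoc, Rinv_l; lra. }
  rewrite Rmax_right, Rmin_right; lra.
Qed.
Lemma ramp_mono a c x y : a < c -> x <= y -> ramp a c x <= ramp a c y.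
Proof.
  intros H Hxy. unfold ramp. apply Rle_min_compat_l, Rle_max_compat_l.
  unfold Rdiv. apply Rmult_le_compat_r; [apply Rlt_le, Rinv_0_lt_compat|]; lra.
Qed.
Lemma ramp_strict a c x y : a < c -> a <= x -> x < c -> x < y -> ramp a c x < ramp a c y.
Proof.
  intros H1 H2 H3 H4. rewrite (ramp_mid a c x) by lra.
  assert ((x - a) / (c - a) < 1).
  { apply (Rmult_lt_reg_r (c - a)); [lra|]. unfold Rdiv. rewrite Rmult_assoc, Rinv_l; lra. }
  destruct (Rle_dec c y); [rewrite ramp_hi; lra|].
  rewrite ramp_mid by lra. unfold Rdiv. apply Rmult_lt_compat_r; [apply Rinv_0_lt_compat|]; lra.
Qed.

Lemma ramp_sum_mono X l x y : (forall c, In c l -> 0 < c) -> x <= y ->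
  ramp_sum X l x <= ramp_sum X l y.
Proof.
  intros Hl Hxy. induction l as [|c l IH]; simpl; [lra|].
  apply Rplus_le_compat; [apply ramp_mono; [apply pred_in_lt, Hl; simpl|]; auto|].
  apply IH. intros; apply Hl; simpl; auto.
Qed.

Lemma ramp_sum_strict X l x y c : (forall c, In c l -> 0 < c) -> In c l ->
  pred_in X c <= x -> x < c -> x < y -> ramp_sum X l x < ramp_sum X l y.
Proof.
  intros Hl Hc H1 H2 H3. induction l as [|a l IH]; simpl in *; [tauto|].
  destruct Hc as [<-|Hc].
  - apply Rplus_lt_le_compat; [apply ramp_strict; auto; apply pred_in_lt; auto|].
    apply ramp_sum_mono; [intros; apply Hl|]; auto; lra.
  - apply Rplus_le_lt_compat; [apply ramp_mono; [apply pred_in_lt|]; auto; lra | auto].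
Qed.

Lemma ramp_sum_lipschitz X l : (forall c, In c l -> 0 < c) -> exists K, 0 <= K /\
  forall x y, Rabs (ramp_sum X l x - ramp_sum X l y) <= K * Rabs (x - y).
Proof.
  intros Hl. induction l as [|c l IH]; simpl.
  - exists 0. split; [lra|]. intros. rewrite Rminus_0_r, Rabs_R0. lra.
  - destruct IH as [K [HK H]]; [intros; apply Hl; simpl; auto|].
    assert (Pc : pred_in X c < c) by (apply pred_in_lt, Hl; simpl; auto).
    exists (K + / (c - pred_in X c)). split.
    + apply Rplus_le_le_0_compat; [auto | apply Rlt_le, Rinv_0_lt_compat; lra].
    + intros x y. pose proof (ramp_lipschitz (pred_in X c) c x y Pc). specialize (H x y).
      replace (ramp (pred_in X c) c x + ramp_sum X l x - (ramp (pred_in X c) c y + ramp_sum X l y))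
        with ((ramp (pred_in X c) c x - ramp (pred_in X c) c y) + (ramp_sum X l x - ramp_sum X l y))
        by ring.
      eapply Rle_trans; [apply Rabs_triang | unfold Rdiv in *; lra].
Qed.

Lemma ramp_sum_at X l x : (forall c, In c l -> 0 < c) -> In x X ->
  ramp_sum X l x = INR (length (filter (fun c => if Rle_dec c x then true else false) l)).
Proof.
  intros Hl Hx. induction l as [|c l IH]; simpl; [auto|].
  assert (Pc : pred_in X c < c) by (apply pred_in_lt, Hl; simpl; auto).
  rewrite IH by (intros; apply Hl; simpl; auto).
  destruct (Rle_dec c x).
  - rewrite ramp_hi by auto. cbn [length]. rewrite S_INR. ring.
  - rewrite ramp_lo; [ring | auto | apply pred_in_ge; auto; lra].
Qed.

Lemma least_above (X : list R) x : (exists d, In d X /\ x < d) ->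
  exists c, In c X /\ x < c /\ forall d, In d X -> x < d -> c <= d.
Proof.
  induction X as [|a X IH]; intros [d [Hd Hxd]]; [destruct Hd|].
  destruct (classic (exists d, In d X /\ x < d)) as [Ex|Nex].
  - destruct (IH Ex) as [c [Hc [Hxc Hm]]].
    destruct (Rlt_dec x a) as [Ha|Ha]; [destruct (Rle_dec a c)|].
    + exists a. split; [simpl; auto | split; [auto|]].
      intros d' [<-|Hd'] Hx; [lra|]. specialize (Hm d' Hd' Hx). lra.
    + exists c. split; [simpl; auto | split; [auto|]]. intros d' [<-|Hd'] Hx; [lra | auto].
    + exists c. split; [simpl; auto | split; [auto|]]. intros d' [<-|Hd'] Hx; [lra | auto].
  - destruct Hd as [<-|Hd]; [|exfalso; apply Nex; eauto].
    exists a. split; [simpl; auto | split; [auto|]].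
    intros d' [<-|Hd'] Hx; [lra | exfalso; apply Nex; eauto].
Qed.

Section Straighten.
Variable X : list R.
Hypothesis HX : coord_list X.

Lemma positives_length_pos : 0 < INR (length (positives X)).
Proof.
  destruct HX as [_ [H1 _]]. apply lt_0_INR.
  assert (In 1 (positives X)) by (apply positives_In; split; auto; lra).
  destruct (positives X); [destruct H | simpl; lia].
Qed.

Lemma straighten_0 : straighten X 0 = 0.
Proof.
  unfold straighten. replace (ramp_sum X (positives X) 0) with 0; [unfold Rdiv; ring|].
  generalize (positives_pos X). induction (positives X) as [|c l IH]; intros Hp; simpl; [auto|].
  rewrite <- IH, ramp_lo; [ring | apply pred_in_lt, Hp | apply fold_max_nonneg | intros; apply Hp];
    simpl; auto.
Qed.

Lemma straighten_1 : straighten X 1 = 1.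
Proof.
  unfold straighten. replace (ramp_sum X (positives X) 1) with (INR (length (positives X))).
  - field. apply Rgt_not_eq, positives_length_pos.
  - assert (Hp : forall c, In c (positives X) -> 0 < c <= 1).
    { intros c Hc. apply positives_In in Hc as [Hc Hc0]. destruct HX as [_ [_ H3]].
      specialize (H3 c Hc). lra. }
    induction (positives X) as [|c l IH]; [reflexivity|].
    cbn [length ramp_sum fold_right]. fold (ramp_sum X l 1).
    rewrite <- IH by (intros; apply Hp; simpl; auto).
    rewrite ramp_hi by (try apply pred_in_lt; apply Hp; simpl; auto).
    rewrite S_INR. ring.
Qed.

Lemma straighten_strict x y : 0 <= x -> x < y -> y <= 1 -> straighten X x < straighten X y.
Proof.
  intros Hx Hxy Hy. unfold straighten.
  apply Rmult_lt_compat_r; [apply Rinv_0_lt_compat, positives_length_pos|].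
  destruct (least_above X x) as [c [Hc [Hxc Hm]]]; [exists 1; split; [apply HX | lra]|].
  apply (ramp_sum_strict X (positives X) x y c); auto.
  - apply positives_pos.
  - apply positives_In; split; auto; lra.
  - apply pred_in_le; [auto|]. intros d Hd Hdc.
    destruct (Rle_dec d x); [auto|]. specialize (Hm d Hd ltac:(lra)). lra.
Qed.

Lemma straighten_cont : cont_on (straighten X) 0 1.
Proof.
  destruct (ramp_sum_lipschitz X (positives X) (positives_pos X)) as [K [HK H]].
  pose proof positives_length_pos as HN. set (N := INR (length (positives X))) in *.
  assert (HNi : 0 < / N <= 1).
  { split; [apply Rinv_0_lt_compat; auto|]. rewrite <- Rinv_1. apply Rinv_le_contravar; [lra|].
    unfold N in *. apply (le_INR 1), INR_lt. simpl. lra. }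
  intros t Ht eps He. exists (eps / (K + 1)). split; [apply Rdiv_lt_0_compat; lra|].
  intros s Hs Hts. unfold straighten, Rdiv. fold N.
  rewrite <- Rmult_minus_distr_r, Rabs_mult, (Rabs_right (/ N)) by lra.
  specialize (H t s).
  assert ((K + 1) * Rabs (t - s) < eps).
  { apply (Rmult_lt_compat_l (K + 1)) in Hts; [|lra].
    replace ((K + 1) * (eps / (K + 1))) with eps in Hts by (field; lra). lra. }
  pose proof (Rabs_pos (t - s)).
  pose proof (Rabs_pos (ramp_sum X (positives X) t - ramp_sum X (positives X) s)).
  nra.
Qed.

End Straighten.

Definition grid (m : nat) : list R :=
  flat_map (fun N => map (fun i => INR i / INR N) (seq 0 (S N))) (seq 1 m).

Lemma straighten_grid X x : coord_list X -> In x X -> In (straighten X x) (grid (length X)).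
Proof.
  intros HX Hx. unfold straighten. rewrite ramp_sum_at; [|apply positives_pos | auto].
  unfold grid. apply in_flat_map. exists (length (positives X)). split.
  - apply in_seq. pose proof (positives_length_pos X HX).
    assert (0 < length (positives X))%nat by (apply INR_lt; simpl; lra).
    assert (length (positives X) <= length X)%nat by apply filter_length_le. lia.
  - apply in_map_iff. eexists. split; [reflexivity|]. apply in_seq. split; [lia|].
    pose proof (filter_length_le (fun c => if Rle_dec c x then true else false) (positives X)).
    simpl. lia.
Qed.

Definition incr_homeo01 (f : R -> R) : Prop :=
  cont_on f 0 1 /\ f 0 = 0 /\ f 1 = 1 /\ forall x y, 0 <= x -> x < y -> y <= 1 -> f x < f y.

Lemma straighten_homeo X : coord_list X -> incr_homeo01 (straighten X).
Proof.
  intros HX. split; [|split; [|split]].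
  - apply straighten_cont; auto.
  - apply straighten_0; auto.
  - apply straighten_1; auto.
  - intros; apply straighten_strict; auto.
Qed.

Section IncrHomeo.
Variable f : R -> R.
Hypothesis Hf : incr_homeo01 f.

Lemma homeo01_lt x y : 0 <= x <= 1 -> 0 <= y <= 1 -> (f x < f y <-> x < y).
Proof.
  destruct Hf as [_ [_ [_ S]]]. intros Hx Hy. split; [|intros; apply S; lra].
  intros H. destruct (Rtotal_order x y) as [|[->|Hyx]]; [auto | lra|].
  specialize (S y x ltac:(lra) Hyx ltac:(lra)). lra.
Qed.

Lemma homeo01_le x y : 0 <= x <= 1 -> 0 <= y <= 1 -> (f x <= f y <-> x <= y).
Proof.
  intros Hx Hy. pose proof (homeo01_lt y x Hy Hx) as H.
  split; intros Hle; apply Rnot_lt_le; intros Hlt; apply H in Hlt; lra.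
Qed.

Lemma homeo01_range x : 0 <= x <= 1 -> 0 <= f x <= 1.
Proof.
  intros Hx. destruct Hf as [_ [F0 [F1 _]]].
  rewrite <- F0 at 1. rewrite <- F1. split; apply homeo01_le; lra.
Qed.

Lemma homeo01_inverse_cont g : (forall y, 0 <= y <= 1 -> 0 <= g y <= 1 /\ f (g y) = y) ->
  cont_on g 0 1.
Proof.
  intros Hg y Hy eps He. destruct (Hg y Hy) as [Ry Ey]. set (x := g y) in *.
  assert (D1 : exists d1, 0 < d1 /\ (x + eps / 2 <= 1 -> d1 <= f (x + eps / 2) - y)).
  { destruct (Rle_dec (x + eps / 2) 1); [|exists 1; split; intros; lra].
    exists (f (x + eps / 2) - y). split; [|lra].
    rewrite <- Ey. assert (f x < f (x + eps / 2)) by (apply homeo01_lt; lra). lra. }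
  assert (D2 : exists d2, 0 < d2 /\ (0 <= x - eps / 2 -> d2 <= y - f (x - eps / 2))).
  { destruct (Rle_dec 0 (x - eps / 2)); [|exists 1; split; intros; lra].
    exists (y - f (x - eps / 2)). split; [|lra].
    rewrite <- Ey. assert (f (x - eps / 2) < f x) by (apply homeo01_lt; lra). lra. }
  destruct D1 as [d1 [Hd1 Ed1]]. destruct D2 as [d2 [Hd2 Ed2]].
  exists (Rmin d1 d2). split; [apply Rmin_glb_lt; auto|].
  intros y' Hy' Hyy. destruct (Hg y' Hy') as [Ry' Ey']. set (x' := g y') in *.
  pose proof (Rmin_l d1 d2). pose proof (Rmin_r d1 d2). apply Rabs_def2 in Hyy.
  apply Rabs_def1.
  - destruct (Rle_dec (x - x') (eps / 2)); [lra | exfalso].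
    assert (f x' <= f (x - eps / 2)) by (apply homeo01_le; lra).
    specialize (Ed2 ltac:(lra)). lra.
  - destruct (Rle_dec (x' - x) (eps / 2)); [lra | exfalso].
    assert (f (x + eps / 2) <= f x') by (apply homeo01_le; lra).
    specialize (Ed1 ltac:(lra)). lra.
Qed.

Lemma homeo01_inv : exists g, incr_homeo01 g /\
  (forall y, 0 <= y <= 1 -> 0 <= g y <= 1 /\ f (g y) = y) /\
  (forall x, 0 <= x <= 1 -> g (f x) = x).
Proof.
  assert (EX : forall y, exists x, 0 <= y <= 1 -> 0 <= x <= 1 /\ f x = y).
  { intros y. destruct (Rle_dec 0 y); [destruct (Rle_dec y 1)|];
      [|exists 0; intros; lra | exists 0; intros; lra].
    destruct Hf as [C [H0 [H1 _]]].
    destruct (IVT_on f 0 1 y) as [x [Hx Ex]]; [lra | auto | |exists x; auto].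
    rewrite H0, H1, Rmin_left, Rmax_right; lra. }
  set (g := fun y => proj1_sig (constructive_indefinite_description _ (EX y))).
  assert (Hg : forall y, 0 <= y <= 1 -> 0 <= g y <= 1 /\ f (g y) = y)
    by (intros y Hy; unfold g; destruct (constructive_indefinite_description _ _) as [x Hx]; auto).
  assert (Hgf : forall x, 0 <= x <= 1 -> g (f x) = x).
  { intros x Hx. destruct (Hg (f x) (homeo01_range x Hx)) as [A B].
    destruct (Rtotal_order (g (f x)) x) as [Hlt|[Heq|Hgt]]; [exfalso | auto | exfalso].
    - apply (homeo01_lt (g (f x)) x) in Hlt; auto. lra.
    - apply (homeo01_lt x (g (f x))) in Hgt; auto. lra. }
  destruct Hf as [_ [F0 [F1 _]]].
  exists g. split; [|split; auto]. split; [|split; [|split]].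
  - apply homeo01_inverse_cont; auto.
  - rewrite <- F0 at 1. apply Hgf. lra.
  - rewrite <- F1 at 1. apply Hgf. lra.
  - intros a b Ha Hab Hb.
    destruct (Hg a ltac:(lra)) as [Ra Ea]. destruct (Hg b ltac:(lra)) as [Rb Eb].
    apply homeo01_lt; auto. rewrite Ea, Eb; auto.
Qed.

End IncrHomeo.

(** * Finitely many classes *)

Definition map_pt (f1 f2 : R -> R) (p : pt) : pt := (f1 (fst p), f2 (snd p)).
Definition map_rect (f1 f2 : R -> R) (r : rect) : rect :=
  mkRect (f1 (rx0 r)) (f1 (rx1 r)) (f2 (ry0 r)) (f2 (ry1 r)).

Section ProductMap.
Variables f1 f2 : R -> R.
Hypotheses (H1 : incr_homeo01 f1) (H2 : incr_homeo01 f2).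

Lemma map_rect_in r p : proper_rect r -> in_sq p ->
  in_rect (map_rect f1 f2 r) (map_pt f1 f2 p) <-> in_rect r p.
Proof.
  intros G [Sx Sy]. unfold proper_rect in G. unfold in_rect, map_rect, map_pt; simpl.
  rewrite !(homeo01_le f1), !(homeo01_le f2) by (auto; lra). tauto.
Qed.

Lemma map_rect_interior r p : proper_rect r -> in_sq p ->
  in_interior (map_rect f1 f2 r) (map_pt f1 f2 p) <-> in_interior r p.
Proof.
  intros G [Sx Sy]. unfold proper_rect in G. unfold in_interior, map_rect, map_pt; simpl.
  rewrite !(homeo01_lt f1), !(homeo01_lt f2) by (auto; lra). tauto.
Qed.

Lemma map_rect_proper r : proper_rect r -> proper_rect (map_rect f1 f2 r).
Proof.
  intros G. pose proof G as [Gx0 [Gx1 [Gy0 Gy1]]]. unfold proper_rect, map_rect; simpl.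
  pose proof (homeo01_range f1 H1 (rx0 r)). pose proof (homeo01_range f1 H1 (rx1 r)).
  pose proof (homeo01_range f2 H2 (ry0 r)). pose proof (homeo01_range f2 H2 (ry1 r)).
  assert (f1 (rx0 r) < f1 (rx1 r)) by (apply homeo01_lt; auto; lra).
  assert (f2 (ry0 r) < f2 (ry1 r)) by (apply homeo01_lt; auto; lra).
  repeat split; lra.
Qed.

Lemma map_pt_homeo : homeo_sq (map_pt f1 f2).
Proof.
  destruct (homeo01_inv f1 H1) as [g1 [N1 [G1 F1]]].
  destruct (homeo01_inv f2 H2) as [g2 [N2 [G2 F2]]].
  assert (range : forall h1 h2, incr_homeo01 h1 -> incr_homeo01 h2 -> maps_sq (map_pt h1 h2))
    by (intros h1 h2 K1 K2 p [A B]; split; simpl; apply homeo01_range; auto).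
  assert (cont : forall h1 h2, incr_homeo01 h1 -> incr_homeo01 h2 -> cont_on_sq (map_pt h1 h2)).
  { intros h1 h2 [C1 _] [C2 _] p [Sx Sy] eps He.
    destruct (C1 (fst p) Sx eps He) as [d1 [Hd1 K1]].
    destruct (C2 (snd p) Sy eps He) as [d2 [Hd2 K2]].
    exists (Rmin d1 d2). split; [apply Rmin_glb_lt; auto|]. intros q [Qx Qy] Hpq.
    pose proof (dist2_fst p q). pose proof (dist2_snd p q).
    pose proof (Rmin_l d1 d2). pose proof (Rmin_r d1 d2).
    apply Rmax_lub_lt; simpl; [apply K1 | apply K2]; auto; lra. }
  split; [apply range; auto | split; [apply cont; auto|]]. exists (map_pt g1 g2).
  split; [apply range; auto | split; [apply cont; auto | split]].
  - intros [x y] [A B]. unfold map_pt; simpl in *. rewrite F1, F2; auto.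
  - intros [x y] [A B]. unfold map_pt; simpl in *. rewrite (proj2 (G1 x A)), (proj2 (G2 y B)). auto.
Qed.

Lemma tiling_map_rect n T : tiling n T -> tiling n (map (map_rect f1 f2) T).
Proof.
  intros HT. pose proof map_pt_homeo as [_ [_ [G [GS [_ [_ FG]]]]]].
  assert (in_image : forall r q, proper_rect r -> in_sq q ->
            in_rect (map_rect f1 f2 r) q <-> in_rect r (G q))
    by (intros r q Gr Sq; rewrite <- (FG q Sq) at 1; apply map_rect_in; auto).
  assert (interior_image : forall r q, proper_rect r -> in_sq q ->
            in_interior (map_rect f1 f2 r) q <-> in_interior r (G q))
    by (intros r q Gr Sq; rewrite <- (FG q Sq) at 1; apply map_rect_interior; auto).
  destruct HT as [L [Gd [Cv Dj]]]. split; [|split; [|split]].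
  - rewrite length_map; auto.
  - intros r' Hr'. apply in_map_iff in Hr' as [r [<- Hr]]. apply map_rect_proper, Gd; auto.
  - intros q Sq. destruct (Cv (G q) (GS q Sq)) as [r [Hr Hin]].
    exists (map_rect f1 f2 r). split; [apply in_map; auto | apply in_image; try apply Gd; auto].
  - intros i j d Hi Hj Hij q [X Y]. rewrite length_map in Hi, Hj.
    rewrite (nth_indep _ d (map_rect f1 f2 d)), map_nth in X by (rewrite length_map; auto).
    rewrite (nth_indep _ d (map_rect f1 f2 d)), map_nth in Y by (rewrite length_map; auto).
    assert (Gi : proper_rect (nth i T d)) by (apply Gd, nth_In; auto).
    assert (Gj : proper_rect (nth j T d)) by (apply Gd, nth_In; auto).
    assert (Sq : in_sq q)
      by exact (in_rect_sq _ q (map_rect_proper _ Gi) (in_interior_rect _ _ X)).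
    apply interior_image in X, Y; auto. exact (Dj i j d Hi Hj Hij (G q) (conj X Y)).
Qed.

Lemma equiv_tiling_map_rect n T : tiling n T -> equiv_tiling T (map (map_rect f1 f2) T).
Proof.
  intros HT. pose proof map_pt_homeo as Hhom.
  pose proof Hhom as [_ [_ [G [GS [_ [_ FG]]]]]].
  apply equiv_tilingE. exists (map_pt f1 f2). split; [auto | split; [|split; [|split]]].
  - destruct H1 as [_ [A0 [A1 _]]]. destruct H2 as [_ [B0 [B1 _]]].
    unfold fixes_corners, map_pt; simpl. rewrite A0, A1, B0, B1. auto.
  - intros r Hr. pose proof (tiling_proper n T r HT Hr) as Gr.
    exists (map_rect f1 f2 r). split; [apply in_map; auto|]. intros q. split.
    + intros Hq. assert (Sq : in_sq q) by exact (in_rect_sq _ q (map_rect_proper r Gr) Hq).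
      exists (G q). rewrite <- (FG q Sq) in Hq. rewrite map_rect_in in Hq; auto.
    + intros [p [Hp <-]]. apply map_rect_in; auto. exact (in_rect_sq r p Gr Hp).
  - intros p q _ _ E _. unfold map_pt; simpl. rewrite E; auto.
  - intros p q _ _ E _. unfold map_pt; simpl. rewrite E; auto.
Qed.

End ProductMap.

Fixpoint lists_of_length (k : nat) (S : list rect) : list (list rect) :=
  match k with
  | O => [[]]
  | Datatypes.S k' => flat_map (fun r => map (cons r) (lists_of_length k' S)) S
  end.

Lemma lists_of_length_In S l : (forall r, In r l -> In r S) -> In l (lists_of_length (length l) S).
Proof.
  induction l as [|a l IH]; intros H; simpl; [auto|].
  apply in_flat_map. exists a. split; [apply H; simpl; auto|].
  apply in_map, IH. intros; apply H; simpl; auto.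
Qed.

Definition rects_over (V : list R) : list rect :=
  flat_map (fun a => flat_map (fun b => flat_map (fun c => map (fun d => mkRect a b c d) V) V) V) V.

Lemma rects_over_In V a b c d : In a V -> In b V -> In c V -> In d V ->
  In (mkRect a b c d) (rects_over V).
Proof.
  intros Ha Hb Hc Hd. unfold rects_over.
  apply in_flat_map. exists a. split; [auto|]. apply in_flat_map. exists b. split; [auto|].
  apply in_flat_map. exists c. split; [auto|]. apply in_map; auto.
Qed.

Lemma coord_list_x n T : tiling n T -> coord_list (0 :: 1 :: x_coords T).
Proof.
  intros HT. split; [simpl; auto | split; [simpl; auto|]].
  intros d [<-|[<-|Hd]]; [lra | lra|].
  apply in_flat_map in Hd as [r [Hr Hd]]. pose proof (tiling_proper n T r HT Hr) as G.
  unfold proper_rect in G. destruct Hd as [<-|[<-|[]]]; lra.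
Qed.

Lemma coord_list_y n T : tiling n T -> coord_list (0 :: 1 :: y_coords T).
Proof.
  intros HT. split; [simpl; auto | split; [simpl; auto|]].
  intros d [<-|[<-|Hd]]; [lra | lra|].
  apply in_flat_map in Hd as [r [Hr Hd]]. pose proof (tiling_proper n T r HT Hr) as G.
  unfold proper_rect in G. destruct Hd as [<-|[<-|[]]]; lra.
Qed.

Lemma coords_length T : length (x_coords T) = (2 * length T)%nat /\
  length (y_coords T) = (2 * length T)%nat.
Proof.
  induction T as [|r T [IHx IHy]]; [auto|]. unfold x_coords, y_coords in *.
  simpl. rewrite IHx, IHy. lia.
Qed.

(* Straightening both axes moves every tile corner onto the grid of fractions with
   denominator at most [2 + 2 n]. *)
Lemma tiling_classes_finite n : exists C, forall T, tiling n T ->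
  exists c, In c C /\ tiling n c /\ equiv_tiling T c.
Proof.
  exists (lists_of_length n (rects_over (grid (2 + 2 * n)))). intros T HT.
  set (X := 0 :: 1 :: x_coords T). set (Y := 0 :: 1 :: y_coords T).
  pose proof (straighten_homeo X (coord_list_x n T HT)) as HX.
  pose proof (straighten_homeo Y (coord_list_y n T HT)) as HY.
  exists (map (map_rect (straighten X) (straighten Y)) T).
  split; [|split; [apply tiling_map_rect | apply (equiv_tiling_map_rect _ _ HX HY n)]; auto].
  assert (L : length T = n) by apply HT.
  assert (LX : length X = (2 + 2 * n)%nat)
    by (unfold X; simpl; rewrite (proj1 (coords_length T)); lia).
  assert (LY : length Y = (2 + 2 * n)%nat)
    by (unfold Y; simpl; rewrite (proj2 (coords_length T)); lia).
  replace n with (length (map (map_rect (straighten X) (straighten Y)) T)) at 1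
    by (rewrite length_map; auto).
  apply lists_of_length_In. intros r' Hr'. apply in_map_iff in Hr' as [r [<- Hr]].
  assert (IX : forall v, In v [rx0 r; rx1 r] -> In (straighten X v) (grid (2 + 2 * n)))
    by (intros v Hv; rewrite <- LX; apply straighten_grid; [apply coord_list_x with n; auto |];
        right; right; apply in_flat_map; exists r; auto).
  assert (IY : forall v, In v [ry0 r; ry1 r] -> In (straighten Y v) (grid (2 + 2 * n)))
    by (intros v Hv; rewrite <- LY; apply straighten_grid; [apply coord_list_y with n; auto |];
        right; right; apply in_flat_map; exists r; auto).
  apply rects_over_In; [apply IX | apply IX | apply IY | apply IY]; simpl; auto.
Qed.

(** * Classes of tilings *)

Lemma num_classes_transversal n P L :
  transversal _ (tiling n) equiv_tiling P L -> num_classes P n (length L).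
Proof.
  intros [ND [HL [HE HC]]]. exists L. split; [auto | split; [auto | split]].
  - intros i j d Hi Hj Hij. apply HE; try (apply nth_In; auto).
    intros Eij. apply Hij, (proj1 (NoDup_nth L d) ND); auto.
  - intros T HT HP. destruct (HC T HT HP) as [T' [? ?]]. eauto.
Qed.

Lemma fixed_act_conj g s s' T : (forall U, s (act_tiling g U) = act_tiling g (s' U)) ->
  fixed _ equiv_tiling s' T -> fixed _ equiv_tiling s (act_tiling g T).
Proof. intros Hc Hf. unfold fixed. rewrite Hc. apply equiv_tiling_act, Hf. Qed.

Lemma fixed_act_step n g (b : bool) T U : tiling n T -> tiling n U ->
  (b = true -> fixed _ equiv_tiling (act_tiling g) T) -> equiv_tiling U T ->
  tiling n ((if b then act_tiling g else fun V => V) U) /\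
  equiv_tiling ((if b then act_tiling g else fun V => V) U) T.
Proof.
  intros HT HU Hf HE. destruct b; [|auto]. split; [apply tiling_act; auto|].
  apply (equiv_tiling_trans n _ (act_tiling g T)); try apply tiling_act; auto.
  - apply equiv_tiling_act; auto.
  - apply Hf; reflexivity.
Qed.

Lemma d8_fixed_generators n T : tiling n T -> d8_fixed T <->
  fixed _ equiv_tiling flip_x T /\ fixed _ equiv_tiling flip_y T /\ fixed _ equiv_tiling swap_xy T.
Proof.
  intros HT. split; [intros H; repeat split; apply H|].
  intros [Fx [Fy Fs]] [[sw fx] fy]. rewrite act_tiling_generators.
  destruct (fixed_act_step n _ fx T T HT HT (fun _ => Fx) (equiv_tiling_refl T)) as [H1 E1].
  destruct (fixed_act_step n _ fy T _ HT H1 (fun _ => Fy) E1) as [H2 E2].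
  apply (fixed_act_step n _ sw T _ HT H2 (fun _ => Fs) E2).
Qed.

Lemma d8_fixed_parity n L : transversal _ (tiling n) equiv_tiling (fun _ => True) L ->
  exists L', transversal _ (tiling n) equiv_tiling d8_fixed L' /\
    Nat.even (length L') = Nat.even (length L).
Proof.
  intros H0.
  pose proof (transversal_fixed_parity _ _ _ equiv_tiling_refl (equiv_tiling_sym n)
                (equiv_tiling_trans n)) as parity.
  pose proof (transversal_ext _ _ _ equiv_tiling_refl (equiv_tiling_sym n)
                (equiv_tiling_trans n)) as ext.
  set (Fix s := fixed _ equiv_tiling s).
  assert (FixE : forall g, (forall T, act_tiling g (act_tiling g T) = T) ->
            forall T T', tiling n T -> tiling n T' -> Fix (act_tiling g) T -> equiv_tiling T T' ->
            Fix (act_tiling g) T').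
  { intros g Hg.
    apply (fixed_E _ _ _ equiv_tiling_refl (equiv_tiling_sym n) (equiv_tiling_trans n));
      [exact Hg | apply tiling_act | apply equiv_tiling_act]. }
  destruct (parity flip_x flip_x_invol (tiling_act _ n) (equiv_tiling_act _) (fun _ => True) L)
    as [L1 [H1 P1]]; auto.
  destruct (parity flip_y flip_y_invol (tiling_act _ n) (equiv_tiling_act _)
              (fun T => True /\ Fix flip_x T) L1) as [L2 [H2 P2]]; auto.
  { intros T T' HT HT' [_ F] E. split; [auto | apply (FixE _ flip_x_invol T); auto]. }
  { intros T HT [_ F]. split; [auto|]. apply (fixed_act_conj _ flip_x flip_x); auto.
    apply flip_x_flip_y. }
  destruct (parity swap_xy swap_xy_invol (tiling_act _ n) (equiv_tiling_act _)
              (fun T => (True /\ Fix flip_x T) /\ Fix flip_y T) L2) as [L3 [H3 P3]]; auto.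
  { intros T T' HT HT' [[_ F1] F2] E. split; [split; [auto|] |].
    - apply (FixE _ flip_x_invol T); auto.
    - apply (FixE _ flip_y_invol T); auto. }
  { intros T HT [[_ F1] F2]. split; [split; [auto|] |].
    - apply (fixed_act_conj _ flip_x flip_y); auto. apply flip_x_swap_xy.
    - apply (fixed_act_conj _ flip_y flip_x); auto. apply flip_y_swap_xy. }
  exists L3. split; [|congruence].
  revert H3. apply ext. intros T HT. rewrite (d8_fixed_generators n T HT). unfold Fix. tauto.
Qed.

Lemma mod2_even_eq a b : Nat.even a = Nat.even b -> a mod 2 = b mod 2.
Proof. intros H. rewrite <- !Nat.bit0_mod, !Nat.bit0_odd. unfold Nat.odd. now rewrite H. Qed.

Theorem lemma9 : forall n : nat, (1 <= n)%nat ->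
  exists t s : nat, is_t n t /\ is_s n s /\ Nat.modulo s 2 = Nat.modulo t 2.
Proof.
  intros n _.
  destruct (tiling_classes_finite n) as [C HC].
  destruct (transversal_exists _ _ _ equiv_tiling_refl (equiv_tiling_sym n) (equiv_tiling_trans n)
              (fun _ => True) C) as [L HL].
  { intros T HT _. destruct (HC T HT) as [c [? [? ?]]]. eauto. }
  destruct (d8_fixed_parity n L HL) as [L' [HL' Hpar]].
  exists (length L), (length L').
  split; [|split]; [apply num_classes_transversal; auto .. | apply mod2_even_eq; auto].
Qed.
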